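(* Let $\Gamma$ be a countable group acting on a countable set $X$ by permutations, and let $w:X\to(0,\infty)$ satisfy the boundedness condition. Then the following are equivalent: (i) there exists a $w$-invariant mean on $X$; (ii) there exists a $w$-Følner sequence in $X$.
   Context: The boundedness condition for $w$: for every fixed $g\in\Gamma$ the function $x\mapsto w(gx)/w(x)$ is bounded on $X$. A mean on $X$ is a finitely additive probability measure $\mu$ defined on all subsets of $X$; it extends uniquely to a positive bounded linear functional on $\ell^\infty(X)$, written $F\mapsto\int_X F\,d\mu$. A mean $\mu$ is $w$-invariant if $\mu(gA)=\int_A \frac{w(gx)}{w(x)}\,d\mu(x)$ for all $g\in\Gamma$ and $A\subseteq X$ (equivalently, $\int_X F(gx)\,d\mu(x)=\int_X \frac{w(g^{-1}x)}{w(x)}F(x)\,d\mu(x)$ for all $F\in\ell^\infty(X)$, $g\in\Gamma$). For finite $H\subseteq X$ write $w(H)=\sum_{x\in H}w(x)$. A sequence $(F_n)_{n\ge1}$ of finite nonempty subsets of $X$ is a $w$-Følner sequence if for every $\epsilon>0$ and every finite $L\subset\Gamma$ there is $n_{\epsilon,L}$ such that for all $n\ge n_{\epsilon,L}$ and all $g\in L$: $\frac{w(gF_n\cup F_n)}{w(F_n)}<1+\epsilon$. *)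

From Stdlib Require Import Reals List Classical ClassicalEpsilon.
Import ListNotations.
Open Scope R_scope.

Definition is_group {G : Type} (mul : G -> G -> G) (inv : G -> G) (e : G) : Prop :=
  (forall a b c, mul a (mul b c) = mul (mul a b) c) /\
  (forall a, mul e a = a) /\ (forall a, mul a e = a) /\
  (forall a, mul (inv a) a = e) /\ (forall a, mul a (inv a) = e).

Definition is_action {G X : Type} (mul : G -> G -> G) (e : G) (act : G -> X -> X) : Prop :=
  (forall x, act e x = x) /\ (forall g h x, act (mul g h) x = act g (act h x)).

Definition countable (T : Type) : Prop :=
  exists f : T -> nat, forall a b, f a = f b -> a = b.

Definition bounded_cond {G X : Type} (act : G -> X -> X) (w : X -> R) : Prop :=
  forall g, exists M, forall x, w (act g x) / w x <= M.

Definition bounded_fun {X : Type} (F : X -> R) : Prop :=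
  exists M, forall x, Rabs (F x) <= M.

Definition indicator {X : Type} (A : X -> Prop) : X -> R :=
  fun x => if excluded_middle_informative (A x) then 1 else 0.

Definition is_mean {X : Type} (mu : (X -> Prop) -> R) : Prop :=
  (forall A B, (forall x, A x <-> B x) -> mu A = mu B) /\
  (forall A, 0 <= mu A) /\
  mu (fun _ => True) = 1 /\
  (forall A B, (forall x, A x -> B x -> False) ->
     mu (fun x => A x \/ B x) = mu A + mu B).

(* I is the (unique) extension of mu to a positive linear functional on l^oo(X):
   F |-> \int_X F dmu. *)
Definition is_integral_of {X : Type} (mu : (X -> Prop) -> R) (I : (X -> R) -> R) : Prop :=
  (forall F H, bounded_fun F -> bounded_fun H -> I (fun x => F x + H x) = I F + I H) /\
  (forall c F, bounded_fun F -> I (fun x => c * F x) = c * I F) /\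
  (forall F, bounded_fun F -> (forall x, 0 <= F x) -> 0 <= I F) /\
  (forall A, I (indicator A) = mu A).

Definition img {G X : Type} (act : G -> X -> X) (g : G) (A : X -> Prop) : X -> Prop :=
  fun x => exists y, A y /\ x = act g y.

Definition w_invariant_mean {G X : Type} (act : G -> X -> X) (w : X -> R)
  (mu : (X -> Prop) -> R) : Prop :=
  is_mean mu /\
  exists I, is_integral_of mu I /\
    forall g A, mu (img act g A) = I (fun x => indicator A x * (w (act g x) / w x)).

Definition set_weight {X : Type} (w : X -> R) (S : X -> Prop) (v : R) : Prop :=
  exists l : list X, NoDup l /\ (forall x, In x l <-> S x) /\
    v = fold_right Rplus 0 (map w l).

(* w-Følner sequence; F n is the finite nonempty set of elements of the list F n *)
Definition w_folner {G X : Type} (act : G -> X -> X) (w : X -> R) (F : nat -> list X) : Prop :=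
  (forall n, F n <> []) /\
  forall eps, 0 < eps -> forall L : list G, exists N, forall n, (N <= n)%nat ->
    forall g, In g L -> forall a b,
      set_weight w (fun x => img act g (fun y => In y (F n)) x \/ In x (F n)) a ->
      set_weight w (fun x => In x (F n)) b ->
      a / b < 1 + eps.

From Stdlib Require Import Reals List Classical ClassicalEpsilon FunctionalExtensionality.
From Stdlib Require Import Lra Lia Permutation Wf_nat.
From mathcomp Require filter.
Import ListNotations.
Open Scope R_scope.

(* Write c_g(x) = w(gx)/w(x).

   (ii) => (i) [mean_of_folner_sequence]: ultralimits of the w-weighted
   averages over F_n form a mean whose invariance defect at (g, A) is at most
   w(gF_n \ F_n) + (sup c_g) w(g^-1 F_n \ F_n) = o(w(F_n)).

   (i) => (ii) [folner_set_of_invariant_mean]: without Følner sets for a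
   finite L and eps, eps w(S) <= sum_{g in L} w(gS \ S) for all finite S;
   Namioka's layer cake extends this to nonnegative functions; LP duality then
   yields [0,1]-valued phi_g with drift sum_g (c_g phi_g(g.) - phi_g) >= eps
   on any finite set, and an ultralimit on all of X; but invariance of the
   mean makes the drift integrate to 0. A diagonal choice over an
   enumeration of the group produces the Følner sequence. *)

Definition lsum {A} (f : A -> R) (l : list A) : R := fold_right (fun x s => f x + s) 0 l.

Lemma lsum_app {A} (f : A -> R) l1 l2 : lsum f (l1 ++ l2) = lsum f l1 + lsum f l2.
Proof. induction l1; simpl; [ring | rewrite IHl1; ring]. Qed.

Lemma lsum_ext {A} (f g : A -> R) l :
  (forall x, In x l -> f x = g x) -> lsum f l = lsum g l.
Proof. induction l; simpl; intros H; auto. rewrite H, IHl; auto. Qed.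

Lemma lsum_plus {A} (f g : A -> R) l : lsum (fun x => f x + g x) l = lsum f l + lsum g l.
Proof. induction l; simpl; [ring | rewrite IHl; ring]. Qed.

Lemma lsum_minus {A} (f g : A -> R) l : lsum (fun x => f x - g x) l = lsum f l - lsum g l.
Proof. induction l; simpl; [ring | rewrite IHl; ring]. Qed.

Lemma lsum_scal {A} c (f : A -> R) l : lsum (fun x => c * f x) l = c * lsum f l.
Proof. induction l; simpl; [ring | rewrite IHl; ring]. Qed.

Lemma lsum_zero {A} (f : A -> R) l : (forall x, In x l -> f x = 0) -> lsum f l = 0.
Proof. induction l; simpl; intros H; auto. rewrite H, IHl; auto. ring. Qed.

Lemma lsum_le {A} (f g : A -> R) l :
  (forall x, In x l -> f x <= g x) -> lsum f l <= lsum g l.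
Proof.
  induction l; simpl; intros H; [lra|].
  pose proof (H a (or_introl eq_refl)). pose proof (IHl (fun x Hx => H x (or_intror Hx))). lra.
Qed.

Lemma lsum_nonneg {A} (f : A -> R) l : (forall x, In x l -> 0 <= f x) -> 0 <= lsum f l.
Proof. intros H. pose proof (lsum_le (fun _ => 0) f l H). rewrite lsum_zero in H0; auto. Qed.

Lemma lsum_term_le {A} (f : A -> R) l a :
  (forall x, In x l -> 0 <= f x) -> In a l -> f a <= lsum f l.
Proof.
  induction l; simpl; intros H Ha; [contradiction|]. destruct Ha as [<- | Ha].
  - pose proof (lsum_nonneg f l (fun x Hx => H x (or_intror Hx))). lra.
  - pose proof (H a0 (or_introl eq_refl)). pose proof (IHl (fun x Hx => H x (or_intror Hx)) Ha). lra.
Qed.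

Lemma lsum_abs {A} (f : A -> R) l : Rabs (lsum f l) <= lsum (fun x => Rabs (f x)) l.
Proof.
  induction l; simpl; [rewrite Rabs_R0; lra|].
  eapply Rle_trans; [apply Rabs_triang | lra].
Qed.

Lemma lsum_map {A B} (f : B -> R) (g : A -> B) l : lsum f (map g l) = lsum (fun x => f (g x)) l.
Proof. induction l; simpl; auto. rewrite IHl; auto. Qed.

Lemma lsum_flat_map {A B} (f : B -> R) (g : A -> list B) l :
  lsum f (flat_map g l) = lsum (fun x => lsum f (g x)) l.
Proof. induction l; simpl; auto. rewrite lsum_app, IHl. auto. Qed.

Lemma lsum_prod {A B} (f : A * B -> R) l1 l2 :
  lsum f (list_prod l1 l2) = lsum (fun a => lsum (fun b => f (a, b)) l2) l1.
Proof. induction l1; simpl; auto. rewrite lsum_app, lsum_map, IHl1. auto. Qed.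

Lemma lsum_swap {A B} (f : A -> B -> R) l1 l2 :
  lsum (fun x => lsum (fun y => f x y) l2) l1 = lsum (fun y => lsum (fun x => f x y) l1) l2.
Proof.
  induction l1; simpl.
  - rewrite lsum_zero; auto.
  - rewrite IHl1, <- lsum_plus. auto.
Qed.

Lemma lsum_perm {A} (f : A -> R) l1 l2 : Permutation l1 l2 -> lsum f l1 = lsum f l2.
Proof. intros H; induction H; simpl; auto; lra. Qed.

Lemma lsum_supp {A} (f : A -> R) l1 l2 : NoDup l1 -> NoDup l2 ->
  (forall x, f x <> 0 -> In x l1) -> (forall x, f x <> 0 -> In x l2) ->
  lsum f l1 = lsum f l2.
Proof.
  set (nz := fun x => if Req_EM_T (f x) 0 then false else true).
  assert (Hfilter : forall l, lsum f l = lsum f (filter nz l)).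
  { induction l; simpl; auto. unfold nz at 1.
    destruct (Req_EM_T (f a) 0); simpl; rewrite IHl; auto. lra. }
  intros N1 N2 H1 H2. rewrite (Hfilter l1), (Hfilter l2).
  apply lsum_perm, NoDup_Permutation; try apply NoDup_filter; auto.
  intro x. rewrite !filter_In. unfold nz.
  destruct (Req_EM_T (f x) 0); split; intros [? ?]; try discriminate; auto.
Qed.

Lemma lsum_reindex {X} (f finv : X -> X) (Hfi : forall x, finv (f x) = x)
  (Hff : forall x, f (finv x) = x) (h : X -> R) (Z Y : list X) :
  NoDup Z -> NoDup Y -> (forall z, h z <> 0 -> In z Z) ->
  (forall z, h z <> 0 -> In (finv z) Y) -> lsum h Z = lsum (fun y => h (f y)) Y.
Proof.
  intros NZ NY H1 H2. rewrite <- (lsum_map h f). symmetry. apply lsum_supp; auto.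
  - apply NoDup_map_NoDup_ForallPairs; auto.
    intros a b _ _ E. rewrite <- (Hfi a), <- (Hfi b), E. auto.
  - intros z Hz. rewrite <- (Hff z). apply in_map. auto.
Qed.

Definition eqd {A : Type} (x y : A) : {x = y} + {x <> y} :=
  excluded_middle_informative (x = y).

Definition delta {A} (x y : A) : R := if eqd x y then 1 else 0.

Lemma lsum_delta {A} (f : A -> R) l u : NoDup l -> In u l ->
  lsum (fun t => delta t u * f t) l = f u.
Proof.
  induction l; simpl; intros N Hu; [destruct Hu|].
  inversion N; subst. unfold delta at 1. destruct Hu as [<- | Hu].
  - destruct (eqd a a) as [_ | C]; [|congruence].
    rewrite lsum_zero; [ring|]. intros x Hx. unfold delta.
    destruct (eqd x a); subst; [contradiction | ring].
  - destruct (eqd a u); [subst; contradiction|]. rewrite IHl; auto. ring.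
Qed.

Definition dedup {A} (l : list A) : list A := nodup eqd l.

Lemma dedup_NoDup {A} (l : list A) : NoDup (dedup l).
Proof. apply NoDup_nodup. Qed.

Lemma dedup_In {A} (l : list A) x : In x (dedup l) <-> In x l.
Proof. apply nodup_In. Qed.

Definition ppart (r : R) : R := Rmax r 0.

Lemma ppart_nonneg r : 0 <= ppart r.
Proof. apply Rmax_r. Qed.

Lemma ppart_scale a r : 0 <= a -> ppart (a * r) = a * ppart r.
Proof.
  intros Ha. unfold ppart. replace (Rmax (a * r) 0) with (Rmax (a * r) (a * 0)) by (f_equal; ring).
  apply RmaxRmult. auto.
Qed.

Lemma argmax_list {K} (f : K -> R) (l : list K) : l <> [] ->
  exists m, In m l /\ forall y, In y l -> f y <= f m.
Proof.
  induction l as [|a l IH]; intros H; [congruence|].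
  destruct l as [|b l'].
  - exists a. split; [left; auto | intros y [<- | []]; lra].
  - destruct IH as [m [Hm Hmax]]; [discriminate|].
    destruct (Rle_dec (f a) (f m)).
    + exists m. split; [right; auto | intros y [<- | Hy]; auto].
    + exists a. split; [left; auto|]. intros y [<- | Hy]; [lra|]. specialize (Hmax y Hy). lra.
Qed.

Lemma argmin_list {K} (f : K -> R) (l : list K) : l <> [] ->
  exists m, In m l /\ forall y, In y l -> f m <= f y.
Proof.
  intros H. destruct (argmax_list (fun k => - f k) l H) as [m [Hm Hx]].
  exists m. split; auto. intros y Hy. specialize (Hx y Hy). lra.
Qed.

Lemma separating_value {K} (P N : list K) (lo up : K -> R) :
  (forall p n, In p P -> In n N -> lo n <= up p) ->
  exists r, (forall p, In p P -> r <= up p) /\ (forall n, In n N -> lo n <= r).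
Proof.
  intros H. destruct N as [|n0 Nr].
  - destruct P as [|p0 Pr]; [exists 0; split; intros ? []|].
    destruct (argmin_list up (p0 :: Pr)) as [m [Hm Hmin]]; [discriminate|].
    exists (up m). split; [auto | intros ? []].
  - destruct (argmax_list lo (n0 :: Nr)) as [m [Hm Hmax]]; [discriminate|].
    exists (lo m). split; auto.
Qed.

Lemma div_lt_iff a b c : 0 < b -> (a / b < c <-> a < c * b).
Proof.
  intros Hb. unfold Rdiv. split; intros H.
  - apply (Rmult_lt_compat_r b) in H; auto. rewrite Rmult_assoc, Rinv_l, Rmult_1_r in H; lra.
  - apply (Rmult_lt_reg_r b); auto. rewrite Rmult_assoc, Rinv_l; lra.
Qed.

Lemma NoDup_prod {A B} (l1 : list A) (l2 : list B) :
  NoDup l1 -> NoDup l2 -> NoDup (list_prod l1 l2).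
Proof.
  induction l1 as [|a l1 IH]; simpl; intros N1 N2; [constructor|].
  inversion N1; subst. apply NoDup_app; auto.
  - apply NoDup_map_NoDup_ForallPairs; auto. intros x y _ _ E. injection E; auto.
  - intros [x y] G1 G2. apply in_map_iff in G1. destruct G1 as [b [E _]]. injection E as <- <-.
    apply in_prod_iff in G2. tauto.
Qed.

Lemma eq0_of_le_div_all D C : (forall k, (0 < k)%nat -> Rabs D <= C / INR k) -> D = 0.
Proof.
  intros H. apply NNPP. intro HD. pose proof (Rabs_pos_lt D HD) as Hpos.
  destruct (INR_unbounded (C / Rabs D)) as [k Hk].
  assert (Hk0 : (0 < k)%nat).
  { destruct k; [|lia]. exfalso. specialize (H 1%nat ltac:(lia)). simpl in H.
    assert (0 <= C / Rabs D) by (unfold Rdiv; apply Rmult_le_pos; [lra | left; apply Rinv_0_lt_compat; lra]).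
    simpl in Hk. lra. }
  specialize (H k Hk0). pose proof (lt_0_INR k Hk0).
  apply (Rmult_le_compat_r (INR k)) in H; [|lra].
  replace (C / INR k * INR k) with C in H by (field; lra).
  apply (Rmult_lt_compat_r (Rabs D)) in Hk; auto.
  replace (C / Rabs D * Rabs D) with C in Hk by (field; lra). nra.
Qed.

Record ultra (T : Type) (U : (T -> Prop) -> Prop) : Prop := {
  uI : forall P Q, U P -> U Q -> U (fun x => P x /\ Q x);
  uS : forall P Q, (forall x, P x -> Q x) -> U P -> U Q;
  u0 : ~ U (fun _ => False);
  uC : forall P, U P \/ U (fun x => ~ P x) }.

Lemma ultra_extends (T : Type) (B : (T -> Prop) -> Prop) :
  B (fun _ => True) ->
  (forall P Q, B P -> B Q -> B (fun x => P x /\ Q x)) ->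
  (forall P Q, (forall x, P x -> Q x) -> B P -> B Q) ->
  ~ B (fun _ => False) ->
  exists U, ultra T U /\ forall P, B P -> U P.
Proof.
  intros BT BI BS B0.
  assert (PF : filter.ProperFilter B).
  { constructor; [exact B0|]. constructor; [exact BT | exact BI | exact BS]. }
  destruct (filter.ultraFilterLemma PF) as [U [UU sub]].
  exists U. split; [|exact sub].
  pose proof UU as [[U0 [UT UI US]] _].
  constructor; [exact UI | exact US | exact U0 |].
  intros P. exact (@filter.in_ultra_setVsetC T U P UU).
Qed.

Lemma tail_ultrafilter :
  exists U, ultra nat U /\ forall N, U (fun n => (N <= n)%nat).
Proof.
  destruct (ultra_extends nat (fun P => exists N, forall n, (N <= n)%nat -> P n))
    as [U [HU HB]].
  - exists 0%nat. auto.
  - intros P Q [N1 HP] [N2 HQ]. exists (Nat.max N1 N2).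
    intros n Hn. split; [apply HP | apply HQ]; lia.
  - intros P Q HPQ [N HP]. exists N. auto.
  - intros [N HN]. apply (HN N). lia.
  - exists U. split; auto. intros N. apply HB. exists N. auto.
Qed.

Lemma superset_ultrafilter (X : Type) :
  exists U, ultra (list X) U /\ forall l : list X, U (fun Y => incl l Y).
Proof.
  destruct (ultra_extends (list X) (fun P => exists l, forall Y, incl l Y -> P Y))
    as [U [HU HB]].
  - exists []. auto.
  - intros P Q [l1 HP] [l2 HQ]. exists (l1 ++ l2). intros Y HY.
    split; [apply HP | apply HQ]; intros x Hx; apply HY, in_or_app; auto.
  - intros P Q HPQ [l HP]. exists l. auto.
  - intros [l Hl]. apply (Hl l). intros x; auto.
  - exists U. split; auto. intros l. apply HB. exists l. auto.
Qed.

Lemma bounded_ext {T} (a b : T -> R) : (forall t, a t = b t) -> bounded_fun a -> bounded_fun b.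
Proof. intros E [M H]. exists M. intros t. rewrite <- E. auto. Qed.

Lemma bounded_plus {T} (a b : T -> R) : bounded_fun a -> bounded_fun b -> bounded_fun (fun t => a t + b t).
Proof.
  intros [M1 H1] [M2 H2]. exists (M1 + M2). intro t.
  eapply Rle_trans; [apply Rabs_triang | specialize (H1 t); specialize (H2 t); lra].
Qed.

Lemma bounded_scal {T} c (a : T -> R) : bounded_fun a -> bounded_fun (fun t => c * a t).
Proof.
  intros [M H]. exists (Rabs c * M). intro t. rewrite Rabs_mult.
  apply Rmult_le_compat_l; [apply Rabs_pos | auto].
Qed.

Lemma bounded_lsum {T A} (f : A -> T -> R) l :
  (forall j, In j l -> bounded_fun (f j)) -> bounded_fun (fun t => lsum (fun j => f j t) l).
Proof.
  induction l; intros H; simpl.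
  - exists 0. intros. rewrite Rabs_R0. lra.
  - apply bounded_plus; [apply H; left; auto | apply IHl; intros; apply H; right; auto].
Qed.

Definition is_ulim {T} (U : (T -> Prop) -> Prop) (a : T -> R) (L : R) : Prop :=
  forall d, 0 < d -> U (fun t => Rabs (a t - L) < d).

Definition ulim {T} (U : (T -> Prop) -> Prop) (a : T -> R) : R :=
  epsilon (inhabits 0) (fun L => is_ulim U a L).

Section UltraLimits.

Variables (T : Type) (U : (T -> Prop) -> Prop).
Hypothesis HU : ultra T U.

Lemma u_nonempty P : U P -> exists t, P t.
Proof.
  intros HP. apply NNPP. intro Hn. apply (u0 _ _ HU).
  apply (uS _ _ HU P); [|exact HP]. intros x Px. apply Hn. exists x. exact Px.
Qed.

Lemma u_T : U (fun _ => True).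
Proof.
  destruct (uC _ _ HU (fun _ => True)) as [H | H]; auto.
  exfalso. apply (u0 _ _ HU). apply (uS _ _ HU _ _ (fun x Hx => Hx I) H).
Qed.

Lemma u_always (P : T -> Prop) : (forall t, P t) -> U P.
Proof. intros H. apply (uS _ _ HU _ _ (fun t _ => H t) u_T). Qed.

Lemma u_mono1 (P Q : T -> Prop) : U P -> (forall t, P t -> Q t) -> U Q.
Proof. intros H1 H2. exact (uS _ _ HU P Q H2 H1). Qed.

Lemma u_mono2 (P Q S : T -> Prop) : U P -> U Q -> (forall t, P t -> Q t -> S t) -> U S.
Proof.
  intros H1 H2 H3.
  apply (uS _ _ HU _ S (fun t Ht => H3 t (proj1 Ht) (proj2 Ht)) (uI _ _ HU _ _ H1 H2)).
Qed.

Lemma is_ulim_unique a L1 L2 : is_ulim U a L1 -> is_ulim U a L2 -> L1 = L2.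
Proof.
  intros H1 H2. apply NNPP. intro Hne.
  set (d := Rabs (L1 - L2) / 2).
  assert (Hd : 0 < d). { unfold d. pose proof (Rabs_pos_lt (L1 - L2)). lra. }
  destruct (u_nonempty _ (uI _ _ HU _ _ (H1 d Hd) (H2 d Hd))) as [t [A B]].
  assert (Rabs (L1 - L2) <= Rabs (a t - L1) + Rabs (a t - L2)).
  { replace (L1 - L2) with (- (a t - L1) + (a t - L2)) by ring.
    eapply Rle_trans; [apply Rabs_triang | rewrite Rabs_Ropp; lra]. }
  unfold d in *. lra.
Qed.

(* Bounded sequences have an ultralimit: the supremum of the reals eventually
   below the sequence. *)
Lemma is_ulim_exists a : bounded_fun a -> exists L, is_ulim U a L.
Proof.
  intros [M HM].
  assert (HM' : forall t, -M <= a t <= M).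
  { intro t. specialize (HM t). pose proof (Rle_abs (a t)). pose proof (Rle_abs (- a t)).
    rewrite Rabs_Ropp in *. lra. }
  set (S := fun r => U (fun t => r <= a t)).
  assert (Sb : bound S).
  { exists M. intros r Hr. apply Rnot_lt_le. intro Hlt.
    destruct (u_nonempty _ Hr) as [t Ht]. specialize (HM' t). lra. }
  assert (Sne : exists r, S r).
  { exists (-M). apply u_always. intro t. apply HM'. }
  destruct (completeness S Sb Sne) as [L [Lub1 Lub2]].
  exists L. intros d Hd.
  assert (E1 : exists r, S r /\ L - d < r).
  { apply NNPP. intro Hn. assert (L <= L - d); [|lra]. apply Lub2. intros r Hr.
    apply Rnot_lt_le. intro. apply Hn. exists r. split; [auto | lra]. }
  destruct E1 as [r [Sr Hr]].
  assert (E2 : ~ S (L + d / 2)). { intro HS. specialize (Lub1 _ HS). lra. }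
  destruct (uC _ _ HU (fun t => L + d / 2 <= a t)) as [H | H]; [contradiction|].
  apply (u_mono2 _ _ _ Sr H). intros t A B. apply Rabs_def1; lra.
Qed.

Lemma ulim_spec a : bounded_fun a -> is_ulim U a (ulim U a).
Proof. intros Hb. unfold ulim. apply epsilon_spec, is_ulim_exists; auto. Qed.

Lemma ulim_eq a L : is_ulim U a L -> ulim U a = L.
Proof.
  intros H. apply (is_ulim_unique a); auto. unfold ulim. apply epsilon_spec. exists L; auto.
Qed.

Lemma ulim_ext a b : (forall t, a t = b t) -> ulim U a = ulim U b.
Proof. intros H. replace a with b; auto. apply functional_extensionality. auto. Qed.

Lemma ulim_const c : ulim U (fun _ : T => c) = c.
Proof.
  apply ulim_eq. intros d Hd. apply u_always. intros. rewrite Rminus_diag, Rabs_R0. lra.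
Qed.

Lemma ulim_plus a b : bounded_fun a -> bounded_fun b ->
  ulim U (fun t => a t + b t) = ulim U a + ulim U b.
Proof.
  intros Ha Hb. apply ulim_eq. intros d Hd.
  apply (u_mono2 _ _ _ (ulim_spec a Ha (d / 2) ltac:(lra)) (ulim_spec b Hb (d / 2) ltac:(lra))).
  intros t A B.
  replace (a t + b t - (ulim U a + ulim U b)) with ((a t - ulim U a) + (b t - ulim U b)) by ring.
  eapply Rle_lt_trans; [apply Rabs_triang | lra].
Qed.

Lemma ulim_scal c a : bounded_fun a -> ulim U (fun t => c * a t) = c * ulim U a.
Proof.
  intros Ha. apply ulim_eq. intros d Hd.
  assert (Hc : 0 < Rabs c + 1) by (pose proof (Rabs_pos c); lra).
  apply (u_mono1 _ _ (ulim_spec a Ha (d / (Rabs c + 1)) ltac:(apply Rdiv_lt_0_compat; lra))).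
  intros t Ht.
  replace (c * a t - c * ulim U a) with (c * (a t - ulim U a)) by ring.
  rewrite Rabs_mult.
  apply Rle_lt_trans with (Rabs c * (d / (Rabs c + 1))).
  - apply Rmult_le_compat_l; [apply Rabs_pos | lra].
  - apply Rlt_le_trans with ((Rabs c + 1) * (d / (Rabs c + 1))).
    + apply Rmult_lt_compat_r; [apply Rdiv_lt_0_compat|]; lra.
    + right. field. lra.
Qed.

Lemma ulim_lsum {A} (f : A -> T -> R) l : (forall j, bounded_fun (f j)) ->
  ulim U (fun t => lsum (fun j => f j t) l) = lsum (fun j => ulim U (f j)) l.
Proof.
  intros Hb. induction l as [|a l IH]; simpl; [apply ulim_const|].
  rewrite (ulim_plus (f a) (fun t => lsum (fun j => f j t) l)), IH; auto.
  apply bounded_lsum. auto.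
Qed.

Lemma ulim_le a b : bounded_fun a -> bounded_fun b -> U (fun t => a t <= b t) -> ulim U a <= ulim U b.
Proof.
  intros Ha Hb H. apply Rnot_lt_le. intro Hlt.
  set (d := (ulim U a - ulim U b) / 2).
  pose proof (ulim_spec a Ha d ltac:(unfold d; lra)) as A.
  pose proof (ulim_spec b Hb d ltac:(unfold d; lra)) as B.
  destruct (u_nonempty _ (uI _ _ HU _ _ H (uI _ _ HU _ _ A B))) as [t [H1 [A1 B1]]].
  apply Rabs_def2 in A1. apply Rabs_def2 in B1. unfold d in *. lra.
Qed.

Lemma ulim_eq_of_diff a b : bounded_fun a -> bounded_fun b ->
  is_ulim U (fun t => a t - b t) 0 -> ulim U a = ulim U b.
Proof.
  intros Ha Hb Hd.
  rewrite (ulim_ext a (fun t => b t + (a t - b t))) by (intros; ring).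
  rewrite ulim_plus, (ulim_eq _ 0 Hd); [ring | auto |].
  apply (bounded_ext (fun t => a t + -1 * b t)); [intros; ring|].
  apply bounded_plus; [|apply bounded_scal]; auto.
Qed.

End UltraLimits.

Definition vsum {T} (V : list T) (a x : T -> R) : R := lsum (fun t => a t * x t) V.

Definition cert {K T} (V : list T) (a : K -> T -> R) (b : K -> R) (S : list K)
    (c : list (R * K)) : Prop :=
  (forall p, In p c -> 0 <= fst p /\ In (snd p) S) /\
  (forall t, In t V -> lsum (fun p => fst p * a (snd p) t) c = 0) /\
  lsum (fun p => fst p * b (snd p)) c < 0.

Lemma vsum_upd {T} (V : list T) v (a x : T -> R) r : ~ In v V ->
  vsum (v :: V) a (fun s => if eqd s v then r else x s) = a v * r + vsum V a x.
Proof.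
  intros H. unfold vsum. simpl. destruct (eqd v v); [|congruence]. f_equal.
  apply lsum_ext. intros y Hy. destruct (eqd y v); subst; [contradiction | auto].
Qed.

Section FourierMotzkinStep.

Context {T K : Type}.
Variables (a : K -> T -> R) (b : K -> R) (S : list K) (v : T).

Definition fm_pos := filter (fun k => if Rlt_dec 0 (a k v) then true else false) S.
Definition fm_neg := filter (fun k => if Rlt_dec (a k v) 0 then true else false) S.
Definition fm_zero := filter (fun k => if Req_EM_T (a k v) 0 then true else false) S.

Definition fm_rows (k' : K + K * K) : T -> R :=
  match k' with
  | inl k => a k
  | inr (p, n) => fun t => (- a n v) * a p t + a p v * a n t
  end.

Definition fm_rhs (k' : K + K * K) : R :=
  match k' with
  | inl k => b k
  | inr (p, n) => (- a n v) * b p + a p v * b n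
  end.

Definition fm_index : list (K + K * K) := map inl fm_zero ++ map inr (list_prod fm_pos fm_neg).

Lemma fm_pos_spec p : In p fm_pos <-> In p S /\ 0 < a p v.
Proof. unfold fm_pos. rewrite filter_In. destruct (Rlt_dec 0 (a p v)); intuition congruence. Qed.

Lemma fm_neg_spec p : In p fm_neg <-> In p S /\ a p v < 0.
Proof. unfold fm_neg. rewrite filter_In. destruct (Rlt_dec (a p v) 0); intuition congruence. Qed.

Lemma fm_zero_spec p : In p fm_zero <-> In p S /\ a p v = 0.
Proof. unfold fm_zero. rewrite filter_In. destruct (Req_EM_T (a p v) 0); intuition congruence. Qed.

Lemma fm_index_inv k' : In k' fm_index ->
  (exists k, k' = inl k /\ In k S /\ a k v = 0) \/
  (exists p n, k' = inr (p, n) /\ In p S /\ 0 < a p v /\ In n S /\ a n v < 0).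
Proof.
  unfold fm_index. rewrite in_app_iff, !in_map_iff.
  intros [[k [<- Hk]] | [[p n] [<- Hpn]]].
  - left. exists k. apply fm_zero_spec in Hk. tauto.
  - right. exists p, n. apply in_prod_iff in Hpn. rewrite fm_pos_spec, fm_neg_spec in Hpn. tauto.
Qed.

(* The pair conditions say that every lower bound for [x v] coming from a
   negative row is below every upper bound coming from a positive row, so a
   value for [x v] can be inserted. *)
Lemma fm_extend (V : list T) (x : T -> R) : ~ In v V ->
  (forall k', In k' fm_index -> vsum V (fm_rows k') x <= fm_rhs k') ->
  exists x', forall k, In k S -> vsum (v :: V) (a k) x' <= b k.
Proof.
  intros Hv Hx.
  set (s := fun k => vsum V (a k) x).
  assert (Hpair : forall p n, In p fm_pos -> In n fm_neg ->
            (s n - b n) / (- a n v) <= (b p - s p) / a p v).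
  { intros p n Hp Hn.
    assert (Hin : In (inr (p, n)) fm_index) by (apply in_or_app; right; apply in_map, in_prod; auto).
    apply fm_pos_spec in Hp. apply fm_neg_spec in Hn.
    specialize (Hx _ Hin). simpl in Hx. unfold vsum in Hx.
    rewrite (lsum_ext _ (fun t => (- a n v) * (a p t * x t) + a p v * (a n t * x t))) in Hx
      by (intros; ring).
    rewrite lsum_plus, !lsum_scal in Hx. fold (vsum V (a p) x) (vsum V (a n) x) (s p) (s n) in Hx.
    apply (Rmult_le_reg_l (- a n v * a p v)); [apply Rmult_lt_0_compat; lra|].
    replace (- a n v * a p v * ((s n - b n) / - a n v)) with (a p v * (s n - b n)) by (field; lra).
    replace (- a n v * a p v * ((b p - s p) / a p v)) with (- a n v * (b p - s p)) by (field; lra).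
    lra. }
  destruct (separating_value fm_pos fm_neg (fun n => (s n - b n) / (- a n v))
              (fun p => (b p - s p) / a p v) Hpair) as [r [Hr1 Hr2]].
  exists (fun y => if eqd y v then r else x y). intros k Hk.
  rewrite vsum_upd by auto. fold (s k).
  destruct (Rlt_dec 0 (a k v)) as [Hpos | Hnp].
  - specialize (Hr1 k (proj2 (fm_pos_spec k) (conj Hk Hpos))).
    apply (Rmult_le_compat_l (a k v)) in Hr1; [|lra].
    replace (a k v * ((b k - s k) / a k v)) with (b k - s k) in Hr1 by (field; lra). lra.
  - destruct (Rlt_dec (a k v) 0) as [Hneg | Hnn].
    + specialize (Hr2 k (proj2 (fm_neg_spec k) (conj Hk Hneg))).
      apply (Rmult_le_compat_l (- a k v)) in Hr2; [|lra].
      replace (- a k v * ((s k - b k) / - a k v)) with (s k - b k) in Hr2 by (field; lra). lra.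
    + assert (E : a k v = 0) by lra.
      assert (Hz : In (inl k) fm_index)
        by (apply in_or_app; left; apply in_map, fm_zero_spec; auto).
      specialize (Hx _ Hz). simpl in Hx. fold (s k) in Hx. rewrite E. lra.
Qed.

Definition fm_expand (q : R * (K + K * K)) : list (R * K) :=
  match q with
  | (l, inl k) => [(l, k)]
  | (l, inr (p, n)) => [(l * (- a n v), p); (l * a p v, n)]
  end.

Lemma fm_expand_comb (f : K -> R) (c' : list (R * (K + K * K))) :
  lsum (fun q => fst q * f (snd q)) (flat_map fm_expand c') =
  lsum (fun q => fst q * match snd q with
                         | inl k => f k
                         | inr (p, n) => (- a n v) * f p + a p v * f n end) c'.
Proof.
  rewrite lsum_flat_map. apply lsum_ext. intros [l [k | [p n]]] _; simpl; ring.
Qed.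

Lemma fm_lift_cert (V : list T) c' : cert V fm_rows fm_rhs fm_index c' ->
  cert (v :: V) a b S (flat_map fm_expand c').
Proof.
  intros [Hc1 [Hc2 Hc3]]. split; [|split].
  - intros q Hq. apply in_flat_map in Hq. destruct Hq as [[l k'] [Hin Hq]].
    destruct (Hc1 _ Hin) as [Hl HS]. simpl in Hl, HS.
    destruct (fm_index_inv k' HS) as [[k [-> [Hk _]]] | [p [n [-> [Hp [Hpv [Hn Hnv]]]]]]];
      simpl in Hq.
    + destruct Hq as [<- | []]. auto.
    + destruct Hq as [<- | [<- | []]]; simpl; split; auto; apply Rmult_le_pos; lra.
  - intros t Ht. rewrite (fm_expand_comb (fun k => a k t)).
    destruct Ht as [<- | Ht].
    + apply lsum_zero. intros [l k'] Hq. destruct (Hc1 _ Hq) as [_ HS].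
      destruct (fm_index_inv k' HS) as [[k [-> [_ E]]] | [p [n [-> _]]]]; simpl;
        [rewrite E|]; ring.
    + rewrite <- (Hc2 t Ht). apply lsum_ext. intros [l [k | [p n]]] _; reflexivity.
  - rewrite fm_expand_comb. eapply Rle_lt_trans; [|exact Hc3].
    right. apply lsum_ext. intros [l [k | [p n]]] _; reflexivity.
Qed.

End FourierMotzkinStep.

Theorem fourier_motzkin {T} (V : list T) : NoDup V ->
  forall (K : Type) (a : K -> T -> R) (b : K -> R) (S : list K),
  (exists x : T -> R, forall k, In k S -> vsum V (a k) x <= b k) \/
  (exists c, cert V a b S c).
Proof.
  induction V as [|v V IH]; intros ND K a b S.
  - destruct (classic (exists k, In k S /\ b k < 0)) as [[k [Hk Hb]] | Hn].
    + right. exists [(1, k)]. split; [|split].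
      * intros p [<- | []]. simpl. split; auto; lra.
      * intros t [].
      * simpl. lra.
    + left. exists (fun _ => 0). intros k Hk. unfold vsum. simpl.
      apply Rnot_lt_le. intro. apply Hn. exists k. auto.
  - inversion ND as [|? ? Hv ND']; subst.
    destruct (IH ND' _ (fm_rows a v) (fm_rhs a b v) (fm_index a S v)) as [[x Hx] | [c' Hc']].
    + left. exact (fm_extend a b S v V x Hv Hx).
    + right. exists (flat_map (fm_expand a v) c'). exact (fm_lift_cert a b S v V c' Hc').
Qed.

Section BoxFarkas.

(* The system [b k <= a k . x] (k in S) together with the box constraints
   [0 <= x t <= 1], rewritten in the form [row . x <= rhs]. *)
Context {T K : Type}.
Variables (V : list T) (a : K -> T -> R) (b : K -> R) (S : list K).
Hypothesis NV : NoDup V.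

Definition box_rows (k : T + T + K) : T -> R :=
  match k with
  | inl (inl s) => fun t => delta t s
  | inl (inr s) => fun t => - delta t s
  | inr k => fun t => - a k t
  end.

Definition box_rhs (k : T + T + K) : R :=
  match k with inl (inl _) => 1 | inl (inr _) => 0 | inr k => - b k end.

Definition box_index : list (T + T + K) :=
  map (fun s => inl (inl s)) V ++ map (fun s => inl (inr s)) V ++ map inr S.

Lemma box_index_inv k : In k box_index ->
  (exists s, In s V /\ (k = inl (inl s) \/ k = inl (inr s))) \/ (exists k0, In k0 S /\ k = inr k0).
Proof.
  unfold box_index. rewrite !in_app_iff, !in_map_iff.
  intros [[s [<- Hs]] | [[s [<- Hs]] | [k0 [<- Hk]]]]; [left | left | right]; eauto.
Qed.

Lemma box_index_up s : In s V -> In (inl (inl s)) box_index.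
Proof. intros Hs. apply in_or_app. left. apply (in_map (fun s => inl (inl s))). auto. Qed.

Lemma box_index_lo s : In s V -> In (inl (inr s)) box_index.
Proof.
  intros Hs. apply in_or_app. right. apply in_or_app. left.
  apply (in_map (fun s => inl (inr s))). auto.
Qed.

Lemma box_index_row k : In k S -> In (inr k) box_index.
Proof. intros Hk. apply in_or_app. right. apply in_or_app. right. apply in_map. auto. Qed.

Definition box_restrict (c : list (R * (T + T + K))) : list (R * K) :=
  flat_map (fun p => match snd p with inr k => [(fst p, k)] | _ => [] end) c.

Lemma box_restrict_comb (f : K -> R) c :
  lsum (fun p => fst p * f (snd p)) (box_restrict c) =
  lsum (fun p => fst p * match snd p with inr k => f k | _ => 0 end) c.
Proof.
  unfold box_restrict. rewrite lsum_flat_map. apply lsum_ext.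
  intros [l [[s | s] | k]] _; simpl; ring.
Qed.

Lemma box_solution_clip (x : T -> R) :
  (forall k, In k box_index -> vsum V (box_rows k) x <= box_rhs k) ->
  exists x' : T -> R, (forall t, 0 <= x' t <= 1) /\ forall k, In k S -> b k <= vsum V (a k) x'.
Proof.
  intros Hx. exists (fun t => Rmax 0 (Rmin 1 (x t))). split.
  - intros t. split; [apply Rmax_l | apply Rmax_lub; [lra | apply Rmin_l]].
  - assert (Hclip : forall t, In t V -> Rmax 0 (Rmin 1 (x t)) = x t).
    { intros t Ht.
      pose proof (Hx _ (box_index_up t Ht)) as Hup. pose proof (Hx _ (box_index_lo t Ht)) as Hlo.
      simpl in Hup, Hlo. unfold vsum in Hup, Hlo.
      rewrite (lsum_delta x) in Hup by auto.
      rewrite (lsum_ext _ (fun s => -1 * (delta s t * x s))), lsum_scal, lsum_delta in Hlo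
        by (auto || (intros; ring)).
      rewrite Rmin_right, Rmax_right; lra. }
    intros k Hk. pose proof (Hx _ (box_index_row k Hk)) as Hrow.
    simpl in Hrow. unfold vsum in *.
    rewrite (lsum_ext _ (fun t => -1 * (a k t * x t))), lsum_scal in Hrow by (intros; ring).
    rewrite (lsum_ext _ (fun t => a k t * x t)) by (intros t Ht; rewrite Hclip; auto). lra.
Qed.

(* A Farkas certificate of the boxed system, restricted to the original
   rows: per coordinate, the combined row is the upper-box multiplier minus
   the lower-box multiplier, so its positive part is at most the former, and
   these add up to less than the combined right-hand side. *)
Lemma box_certificate_restrict c : cert V box_rows box_rhs box_index c ->
  (forall p, In p (box_restrict c) -> 0 <= fst p /\ In (snd p) S) /\
  lsum (fun t => ppart (lsum (fun p => fst p * a (snd p) t) (box_restrict c))) V <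
  lsum (fun p => fst p * b (snd p)) (box_restrict c).
Proof.
  intros [Hc1 [Hc2 Hc3]]. split.
  - intros p Hp. unfold box_restrict in Hp. apply in_flat_map in Hp.
    destruct Hp as [[l k] [Hin Hp]]. destruct (Hc1 _ Hin) as [Hl Hk]. simpl in *.
    destruct k as [[s | s] | k]; [destruct Hp | destruct Hp |].
    destruct Hp as [<- | []]. simpl. split; auto.
    destruct (box_index_inv _ Hk) as [[s [_ [E | E]]] | [k0 [Hk0 E]]]; try discriminate.
    injection E as ->. auto.
  - set (up := fun t => lsum (fun p => fst p *
                 match snd p with inl (inl s) => delta t s | _ => 0 end) c).
    assert (Hnn : forall p, In p c -> 0 <= fst p) by (intros p Hp; apply (Hc1 p Hp)).
    assert (Hd : forall t s : T, 0 <= delta t s) by (intros t s; unfold delta; destruct (eqd t s); lra).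
    assert (Hpos : forall t, In t V ->
              ppart (lsum (fun p => fst p * a (snd p) t) (box_restrict c)) <= up t).
    { intros t Ht. specialize (Hc2 t Ht). rewrite (box_restrict_comb (fun k => a k t)).
      set (lo := lsum (fun p => fst p * match snd p with inl (inr s) => delta t s | _ => 0 end) c).
      assert (Hsplit : lsum (fun p => fst p * box_rows (snd p) t) c =
                       up t - lo - lsum (fun p => fst p * match snd p with
                                         inr k => a k t | _ => 0 end) c).
      { unfold up, lo. rewrite <- !lsum_minus. apply lsum_ext.
        intros [l [[s | s] | k]] _; simpl; ring. }
      assert (0 <= lo /\ 0 <= up t) as [Hlo Hup].
      { unfold lo, up. split; apply lsum_nonneg; intros [l [[s | s] | k]] Hp; simpl;
          try (rewrite Rmult_0_r; lra); apply Rmult_le_pos; auto; apply (Hnn _ Hp). }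
      unfold ppart. apply Rmax_lub; lra. }
    assert (Hup : lsum up V = lsum (fun p => fst p *
                    match snd p with inl (inl _) => 1 | _ => 0 end) c).
    { unfold up. rewrite lsum_swap. apply lsum_ext. intros [l [[s | s] | k]] Hp; simpl;
        try (rewrite lsum_zero; [ring | intros; ring]).
      rewrite lsum_scal. f_equal.
      destruct (box_index_inv _ (proj2 (Hc1 _ Hp))) as [[s' [Hs' [E | E]]] | [k0 [_ E]]];
        try discriminate. injection E as <-.
      rewrite (lsum_ext _ (fun t => delta t s * 1)) by (intros; ring).
      apply (lsum_delta (fun _ => 1)); auto. }
    assert (Hrhs : lsum (fun p => fst p * box_rhs (snd p)) c =
                   lsum (fun p => fst p * match snd p with inl (inl _) => 1 | _ => 0 end) c -
                   lsum (fun p => fst p * b (snd p)) (box_restrict c)).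
    { rewrite box_restrict_comb, <- lsum_minus. apply lsum_ext.
      intros [l [[s | s] | k]] _; simpl; ring. }
    pose proof (lsum_le _ _ V Hpos). lra.
Qed.

Lemma box_farkas :
  (exists x : T -> R, (forall t, 0 <= x t <= 1) /\ forall k, In k S -> b k <= vsum V (a k) x) \/
  (exists c : list (R * K), (forall p, In p c -> 0 <= fst p /\ In (snd p) S) /\
     lsum (fun t => ppart (lsum (fun p => fst p * a (snd p) t) c)) V <
     lsum (fun p => fst p * b (snd p)) c).
Proof.
  destruct (fourier_motzkin V NV _ box_rows box_rhs box_index) as [[x Hx] | [c Hc]].
  - left. exact (box_solution_clip x Hx).
  - right. exists (box_restrict c). apply box_certificate_restrict; auto.
Qed.

End BoxFarkas.

Lemma bounded_const {T} (c : R) : bounded_fun (fun _ : T => c).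
Proof. exists (Rabs c). intros. lra. Qed.

Lemma bounded_indicator {T} (A : T -> Prop) : bounded_fun (indicator A).
Proof.
  exists 1. intro x. unfold indicator.
  destruct (excluded_middle_informative _); rewrite ?Rabs_R1, ?Rabs_R0; lra.
Qed.

Lemma bounded_minus {T} (a b : T -> R) :
  bounded_fun a -> bounded_fun b -> bounded_fun (fun t => a t - b t).
Proof.
  intros Ha Hb. apply (bounded_ext (fun t => a t + -1 * b t)); [intros; ring|].
  apply bounded_plus; [|apply bounded_scal]; auto.
Qed.

Section Integrals.

Context {X : Type}.
Variables (mu : (X -> Prop) -> R) (I : (X -> R) -> R).
Hypothesis Hmean : is_mean mu.
Hypothesis HI : is_integral_of mu I.

Lemma integral_plus F H : bounded_fun F -> bounded_fun H ->
  I (fun x => F x + H x) = I F + I H.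
Proof. apply HI. Qed.

Lemma integral_scal c F : bounded_fun F -> I (fun x => c * F x) = c * I F.
Proof. apply HI. Qed.

Lemma integral_minus F H : bounded_fun F -> bounded_fun H ->
  I (fun x => F x - H x) = I F - I H.
Proof.
  intros HF HH. replace (fun x => F x - H x) with (fun x => F x + -1 * H x)
    by (apply functional_extensionality; intros; ring).
  rewrite integral_plus, integral_scal; auto; [ring | apply bounded_scal; auto].
Qed.

Lemma integral_const c : I (fun _ => c) = c.
Proof.
  destruct Hmean as [_ [_ [Htot _]]].
  replace (fun _ : X => c) with (fun x => c * indicator (fun _ : X => True) x).
  - rewrite integral_scal, (proj2 (proj2 (proj2 HI))), Htot; [ring | apply bounded_indicator].
  - apply functional_extensionality. intro x. unfold indicator.
    destruct (excluded_middle_informative True); [ring | tauto].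
Qed.

Lemma integral_mono F H : bounded_fun F -> bounded_fun H ->
  (forall x, F x <= H x) -> I F <= I H.
Proof.
  intros HF HH Hle.
  assert (0 <= I (fun x => H x - F x)).
  { apply HI; [apply bounded_minus; auto | intros x; specialize (Hle x); lra]. }
  rewrite integral_minus in H0; auto. lra.
Qed.

Lemma integral_lsum {A} (f : A -> X -> R) l : (forall j, In j l -> bounded_fun (f j)) ->
  I (fun x => lsum (fun j => f j x) l) = lsum (fun j => I (f j)) l.
Proof.
  induction l; intros H; simpl; [apply integral_const|].
  rewrite (integral_plus (f a) (fun x => lsum (fun j => f j x) l)), IHl; auto.
  - intros; apply H; right; auto.
  - apply H; left; auto.
  - apply bounded_lsum. intros; apply H; right; auto.
Qed.

End Integrals.

Definition count (n : nat) (t : R) : R :=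
  lsum (fun j => if Rle_dec (INR j) t then 1 else 0) (seq 1 n).

Lemma count_S n t : count (S n) t = count n t + (if Rle_dec (INR n + 1) t then 1 else 0).
Proof.
  unfold count. rewrite seq_S, lsum_app. cbn [lsum fold_right].
  replace (1 + n)%nat with (S n) by lia. rewrite S_INR. ring.
Qed.

Lemma count_full n t : INR n <= t -> count n t = INR n.
Proof.
  induction n; intros H; [reflexivity|].
  rewrite S_INR in *. rewrite count_S, IHn by lra. destruct (Rle_dec _ t); lra.
Qed.

(* For 0 <= t <= n, the count is the integer part of t, so t - 1 < count <= t. *)
Lemma count_bounds n t : 0 <= t -> t <= INR n -> t - 1 <= count n t <= t.
Proof.
  intros Ht. induction n; intros Hn; [unfold count; simpl in *; lra|].
  rewrite count_S. rewrite S_INR in Hn. destruct (Rle_dec (INR n + 1) t).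
  - rewrite count_full; lra.
  - destruct (Rle_dec (INR n) t) as [Hle | Hlt].
    + rewrite count_full; lra.
    + specialize (IHn ltac:(lra)). lra.
Qed.

Definition staircase {X} (k : nat) (F : X -> R) (x : X) : R :=
  / INR k * lsum (fun j => indicator (fun y => INR j / INR k <= F y) x) (seq 1 k).

Lemma staircase_bounds {X} (k : nat) (F : X -> R) x : (0 < k)%nat -> 0 <= F x <= 1 ->
  F x - / INR k <= staircase k F x <= F x.
Proof.
  intros Hk HF. assert (Hkr : 0 < INR k) by (apply lt_0_INR; auto).
  assert (E : lsum (fun j => indicator (fun y => INR j / INR k <= F y) x) (seq 1 k) =
              count k (INR k * F x)).
  { apply lsum_ext. intros j _. unfold indicator.
    destruct (excluded_middle_informative _) as [h | h]; destruct (Rle_dec _ _) as [h' | h'];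
      auto; exfalso; [apply h' | apply h].
    - apply (Rmult_le_compat_l (INR k)) in h; [|lra].
      replace (INR k * (INR j / INR k)) with (INR j) in h by (field; lra). auto.
    - apply (Rmult_le_reg_l (INR k)); auto.
      replace (INR k * (INR j / INR k)) with (INR j) by (field; lra). auto. }
  unfold staircase. rewrite E.
  destruct (count_bounds k (INR k * F x)) as [Lo Up]; [nra | nra |].
  split; apply (Rmult_le_reg_l (INR k)); auto;
    replace (INR k * (/ INR k * count k (INR k * F x))) with (count k (INR k * F x)) by (field; lra).
  - replace (INR k * (F x - / INR k)) with (INR k * F x - 1) by (field; lra). lra.
  - lra.
Qed.

Ltac destruct_Rmax :=
  repeat match goal with |- context [Rmax ?x ?y] =>
    destruct (Rle_dec x y); [rewrite (Rmax_right x y) by lra | rewrite (Rmax_left x y) by lra]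
  end.

Definition ind {X} (S : list X) : X -> R := indicator (fun x => In x S).

Lemma indicator_01 {X} (A : X -> Prop) x : 0 <= indicator A x <= 1.
Proof. unfold indicator. destruct (excluded_middle_informative _); lra. Qed.

Lemma ppart_layer m s1 s2 r1 r2 : 0 <= m -> 0 <= r1 -> 0 <= r2 ->
  (s1 = 0 /\ r1 = 0 \/ s1 = 1) -> (s2 = 0 /\ r2 = 0 \/ s2 = 1) ->
  ppart (m * s1 + r1 - (m * s2 + r2)) = m * ppart (s1 - s2) + ppart (r1 - r2).
Proof.
  intros Hm H1 H2 [[-> ->] | ->] [[-> ->] | ->]; unfold ppart; destruct_Rmax; nra.
Qed.

Section WeightedAction.

Context {G X : Type}.
Variables (act : G -> X -> X) (inv : G -> G) (w : X -> R).
Hypothesis w_pos : forall x, 0 < w x.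
Hypothesis act_invK : forall g x, act (inv g) (act g x) = x.
Hypothesis act_Kinv : forall g x, act g (act (inv g) x) = x.

(* Finitely supported functions [q] are handled through a duplicate-free
   "frame" list [Z] containing all points that matter. [mass Z q] is the
   w-weighted sum of [q]; for [q = ind S] it is w(S). *)
Definition mass (Z : list X) (q : X -> R) : R := lsum (fun z => w z * q z) Z.

(* [leak g Z q] measures how much of [q] moves to higher values under [g];
   for [q = ind S] it is w(gS \ S). *)
Definition leak (g : G) (Z : list X) (q : X -> R) : R :=
  lsum (fun z => w z * ppart (q (act (inv g) z) - q z)) Z.

Definition dispersion (L : list G) (Z : list X) (q : X -> R) : R :=
  lsum (fun g => leak g Z q) L.

Lemma leak_nonneg g Z q : 0 <= leak g Z q.
Proof.
  apply lsum_nonneg. intros. apply Rmult_le_pos; [left; auto | apply ppart_nonneg].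
Qed.

Lemma mass_ind_pos (S Z : list X) : S <> [] -> incl S Z -> 0 < mass Z (ind S).
Proof.
  intros HS HSZ. destruct S as [|s0 S0]; [congruence|].
  apply Rlt_le_trans with (w s0 * ind (s0 :: S0) s0).
  - unfold ind, indicator. destruct (excluded_middle_informative _) as [_ | h].
    + rewrite Rmult_1_r; auto.
    + exfalso; apply h; left; auto.
  - apply (lsum_term_le (fun z => w z * ind (s0 :: S0) z)); [|apply HSZ; left; auto].
    intros. apply Rmult_le_pos; [left; auto | apply indicator_01].
Qed.

Lemma set_weight_mass (P : X -> Prop) v (Z : list X) :
  set_weight w P v -> NoDup Z -> (forall x, P x -> In x Z) -> v = mass Z (indicator P).
Proof.
  intros [l [Nl [Hl ->]]] NZ HZ. unfold mass.
  transitivity (lsum (fun z => w z * indicator P z) l).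
  - transitivity (lsum w l); [clear; induction l; simpl; congruence|].
    apply lsum_ext. intros x Hx. unfold indicator.
    destruct (excluded_middle_informative (P x)) as [_ | n]; [ring|].
    exfalso. apply n, Hl, Hx.
  - apply lsum_supp; auto; intros x Hx; unfold indicator in Hx;
      destruct (excluded_middle_informative (P x)) as [p | _];
      try (exfalso; apply Hx; ring); [apply Hl | apply HZ]; auto.
Qed.

Lemma mass_set_weight (P : X -> Prop) (Z : list X) :
  NoDup Z -> (forall x, P x -> In x Z) -> set_weight w P (mass Z (indicator P)).
Proof.
  intros NZ HZ.
  exists (filter (fun x => if excluded_middle_informative (P x) then true else false) Z).
  split; [apply NoDup_filter; auto | split].
  - intro x. rewrite filter_In.
    destruct (excluded_middle_informative (P x)) as [p | np]; split; intros H; auto.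
    destruct H; discriminate.
  - unfold mass. clear HZ NZ. induction Z as [|z Z IH]; simpl; auto.
    unfold indicator at 1. destruct (excluded_middle_informative (P z)); simpl; rewrite IH; ring.
Qed.

Lemma indicator_translate_union g (S : list X) z :
  indicator (fun x => img act g (fun y => In y S) x \/ In x S) z =
  ind S z + ppart (ind S (act (inv g) z) - ind S z).
Proof.
  unfold ind, indicator, ppart.
  destruct (excluded_middle_informative (In (act (inv g) z) S)) as [h1 | h1];
  destruct (excluded_middle_informative (In z S)) as [h2 | h2];
  destruct (excluded_middle_informative (img act g (fun y => In y S) z \/ In z S)) as [h3 | h3];
  destruct_Rmax; try lra; exfalso.
  all: first [ solve [apply h3; right; auto]
             | solve [apply h3; left; exists (act (inv g) z); rewrite act_Kinv; auto]
             | destruct h3 as [[y [Hy Ez]] | h3]; [apply h1; rewrite Ez, act_invK | ]; auto ].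
Qed.

Lemma folner_ratio g (S Z : list X) a b eps :
  S <> [] -> NoDup Z -> incl S Z -> (forall x, In x S -> In (act g x) Z) ->
  set_weight w (fun x => img act g (fun y => In y S) x \/ In x S) a ->
  set_weight w (fun x => In x S) b ->
  (a / b < 1 + eps <-> leak g Z (ind S) < eps * mass Z (ind S)).
Proof.
  intros HS NZ HSZ HgZ Ha Hb.
  assert (Eb : b = mass Z (ind S)) by (apply (set_weight_mass _ _ _ Hb); auto).
  assert (Ea : a = mass Z (ind S) + leak g Z (ind S)).
  { rewrite (set_weight_mass _ _ _ Ha NZ) by (intros x [[y [Hy ->]] | Hx]; auto).
    unfold mass, leak. rewrite <- lsum_plus. apply lsum_ext. intros z _.
    rewrite indicator_translate_union. ring. }
  pose proof (mass_ind_pos S Z HS HSZ) as Hm.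
  rewrite Ea, Eb, div_lt_iff by auto. split; intros; lra.
Qed.

Definition folner_set (L : list G) (eps : R) (S : list X) : Prop :=
  S <> [] /\ forall g, In g L -> forall a b,
    set_weight w (fun x => img act g (fun y => In y S) x \/ In x S) a ->
    set_weight w (fun x => In x S) b -> a / b < 1 + eps.

Definition isoperimetric (L : list G) (eps : R) : Prop :=
  forall S Z : list X, NoDup Z -> incl S Z -> (forall g x, In g L -> In x S -> In (act g x) Z) ->
    eps * mass Z (ind S) <= dispersion L Z (ind S).

Lemma isoperimetric_of_no_folner_set L eps :
  ~ (exists S, folner_set L eps S) -> isoperimetric L eps.
Proof.
  intros Hno S Z NZ HSZ Hcl.
  destruct S as [|s0 S0].
  { assert (E : mass Z (ind []) = 0).
    { apply lsum_zero. intros z _. unfold ind, indicator.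
      destruct (excluded_middle_informative _) as [[] | _]. ring. }
    rewrite E, Rmult_0_r. apply lsum_nonneg. intros. apply leak_nonneg. }
  apply Rnot_lt_le. intro Hlt. apply Hno. exists (s0 :: S0). split; [discriminate|].
  intros g Hg a b Ha Hb.
  assert (HS : s0 :: S0 <> []) by discriminate.
  apply (proj2 (folner_ratio g _ Z a b eps HS NZ HSZ (fun x => Hcl g x Hg) Ha Hb)).
  eapply Rle_lt_trans; [|exact Hlt].
  apply (lsum_term_le (fun g => leak g Z (ind (s0 :: S0)))); auto.
  intros. apply leak_nonneg.
Qed.


Lemma layer_decomposition L Z (S : list X) (q r : X -> R) m :
  0 <= m -> (forall x, 0 <= r x) -> (forall x, ~ In x S -> r x = 0) ->
  (forall x, q x = m * ind S x + r x) ->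
  mass Z q = m * mass Z (ind S) + mass Z r /\
  dispersion L Z q = m * dispersion L Z (ind S) + dispersion L Z r.
Proof.
  intros Hm Hr Hout Hq.
  assert (Hcase : forall x, ind S x = 0 /\ r x = 0 \/ ind S x = 1).
  { intros x. unfold ind, indicator.
    destruct (excluded_middle_informative (In x S)); [right | left; split]; auto. }
  split.
  - unfold mass. rewrite <- lsum_scal, <- lsum_plus. apply lsum_ext. intros z _. rewrite Hq. ring.
  - unfold dispersion, leak. rewrite <- lsum_scal, <- lsum_plus. apply lsum_ext. intros g _.
    rewrite <- lsum_scal, <- lsum_plus. apply lsum_ext. intros z _.
    rewrite !Hq, ppart_layer; auto. ring.
Qed.

(* Namioka's layer-cake argument: the isoperimetric inequality for sets
   implies the same inequality for nonnegative finitely supported functions. *)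
Lemma namioka L eps : isoperimetric L eps ->
  forall (S Z : list X) (q : X -> R), NoDup Z -> incl S Z ->
  (forall g x, In g L -> In x S -> In (act g x) Z) ->
  (forall x, 0 <= q x) -> (forall x, q x <> 0 -> In x S) ->
  eps * mass Z q <= dispersion L Z q.
Proof.
  intros Hiso S Z q NZ HSZ HgS Hq Hsupp.
  remember (length S) as n eqn:Hn. revert S q HSZ HgS Hq Hsupp Hn.
  induction n as [n IH] using (well_founded_induction lt_wf). intros S q HSZ HgS Hq Hsupp Hn.
  destruct S as [|s0 S0].
  - assert (E : forall x, q x = 0) by (intro x; apply NNPP; intro Hx; apply (Hsupp x Hx)).
    assert (E0 : forall g z, w z * ppart (q (act (inv g) z) - q z) = 0).
    { intros g z. rewrite !E. unfold ppart. rewrite Rminus_diag, Rmax_right by lra. ring. }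
    unfold mass, dispersion, leak. rewrite (lsum_zero (fun z => w z * q z)).
    + rewrite lsum_zero; [lra|]. intros g _. apply lsum_zero. auto.
    + intros z _. rewrite E. ring.
  - (* Peel off the bottom layer m * 1_S, m the minimum of q on S. *)
    set (S := s0 :: S0) in *.
    destruct (argmin_list q S) as [xm [Hxm Hmin]]; [discriminate|].
    set (m := q xm).
    set (r := fun x => if excluded_middle_informative (In x S) then q x - m else 0).
    assert (Hm : 0 <= m) by apply Hq.
    assert (Hr : forall x, 0 <= r x).
    { intro x. unfold r. destruct (excluded_middle_informative (In x S)); [|lra].
      specialize (Hmin x i). unfold m. lra. }
    assert (Hout : forall x, ~ In x S -> r x = 0).
    { intros x Hx. unfold r. destruct (excluded_middle_informative (In x S)); tauto. }
    assert (Hdec : forall x, q x = m * ind S x + r x).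
    { intro x. unfold r, ind, indicator. destruct (excluded_middle_informative (In x S)); [ring|].
      rewrite Rmult_0_r, Rplus_0_l. apply NNPP. intro Hx. auto. }
    assert (IHr : eps * mass Z r <= dispersion L Z r).
    { apply (IH (length (remove eqd xm S))) with (S := remove eqd xm S); auto.
      - pose proof (remove_length_lt eqd S xm Hxm). lia.
      - intros y Hy. apply in_remove in Hy. apply HSZ. tauto.
      - intros g y Hg Hy. apply in_remove in Hy. apply HgS; tauto.
      - intros y Hy. destruct (excluded_middle_informative (In y S)) as [HyS | HyS];
          [|exfalso; apply Hy, Hout; auto].
        apply in_in_remove; auto. intros ->. apply Hy. unfold r.
        destruct (excluded_middle_informative (In xm S)); [unfold m; ring | contradiction]. }
    assert (HS : eps * mass Z (ind S) <= dispersion L Z (ind S)) by (apply Hiso; auto).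
    destruct (layer_decomposition L Z S q r m Hm Hr Hout Hdec) as [-> ->].
    apply (Rmult_le_compat_l m) in HS; auto. nra.
Qed.

(* The drift of a family phi = (phi_g) of functions at y:
   sum_{g in L} (w(gy)/w(y) * phi_g(gy) - phi_g(y)). Integrating the drift
   against a w-invariant mean gives 0. *)
Definition drift (L : list G) (phi : G -> X -> R) (y : X) : R :=
  lsum (fun g => w (act g y) / w y * phi g (act g y) - phi g y) L.

(* The drift at y as a linear form in the values phi_g(z), (g, z) in L x Z. *)
Definition drift_row (y : X) (t : G * X) : R :=
  w (act (fst t) y) / w y * delta (snd t) (act (fst t) y) - delta (snd t) y.

Lemma drift_as_form L (Z : list X) (x : G * X -> R) y : NoDup Z -> In y Z ->
  (forall g, In g L -> In (act g y) Z) ->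
  vsum (list_prod L Z) (drift_row y) x = drift L (fun g z => x (g, z)) y.
Proof.
  intros NZ Hy HgY. unfold vsum, drift. rewrite lsum_prod. apply lsum_ext. intros g Hg.
  unfold drift_row. simpl.
  rewrite (lsum_ext _ (fun z => w (act g y) / w y * (delta z (act g y) * x (g, z)) -
                                delta z y * x (g, z))) by (intros; ring).
  rewrite lsum_minus, lsum_scal, !(lsum_delta (fun z => x (g, z))); auto.
Qed.

(* A nonnegative combination of drift rows, indexed by points of Y, cannot
   violate the isoperimetric inequality: its coefficients divided by w form a
   function q to which [namioka] applies. *)
Lemma drift_certificate_bound L eps (Y Z : list X) (c : list (R * X)) :
  isoperimetric L eps -> NoDup Z -> incl Y Z ->
  (forall g y, In g L -> In y Y -> In (act g y) Z) ->
  (forall p, In p c -> 0 <= fst p /\ In (snd p) Y) ->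
  lsum (fun p => fst p * eps) c <=
  lsum (fun t => ppart (lsum (fun p => fst p * drift_row (snd p) t) c)) (list_prod L Z).
Proof.
  intros Hiso NZ HYZ HgY Hc.
  set (lam := fun z => lsum (fun p => fst p * delta z (snd p)) c).
  set (q := fun z => lam z / w z).
  assert (Hdelta01 : forall u v : X, 0 <= delta u v).
  { intros u v. unfold delta. destruct (eqd u v); lra. }
  assert (Hq : forall z, 0 <= q z).
  { intro z. unfold q, Rdiv. apply Rmult_le_pos; [|left; apply Rinv_0_lt_compat; auto].
    apply lsum_nonneg. intros p Hp. apply Rmult_le_pos; [apply (Hc p Hp) | auto]. }
  assert (Hsupp : forall z, q z <> 0 -> In z Y).
  { intros z Hz. apply NNPP. intro HzY. apply Hz. unfold q, lam.
    rewrite lsum_zero; [unfold Rdiv; ring|]. intros p Hp. unfold delta.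
    destruct (eqd z (snd p)) as [E | _]; [exfalso; apply HzY; rewrite E; apply (Hc p Hp) | ring]. }
  assert (Hmass : lsum (fun p => fst p * eps) c = eps * mass Z q).
  { unfold mass, q. rewrite (lsum_ext _ (fun z => lam z)).
    - unfold lam. rewrite lsum_swap, <- lsum_scal. apply lsum_ext. intros p Hp.
      rewrite lsum_scal, (lsum_ext _ (fun z => delta z (snd p) * 1)) by (intros; ring).
      rewrite (lsum_delta (fun _ => 1)); [ring | auto | apply HYZ, (Hc p Hp)].
    - intros z _. field. apply Rgt_not_eq, w_pos. }
  assert (Hrow : forall g z, lsum (fun p => fst p * drift_row (snd p) (g, z)) c =
                             w z * (q (act (inv g) z) - q z)).
  { intros g z. unfold q.
    replace (w z * (lam (act (inv g) z) / w (act (inv g) z) - lam z / w z))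
      with (w z / w (act (inv g) z) * lam (act (inv g) z) - lam z)
      by (field; split; apply Rgt_not_eq, w_pos).
    unfold lam. rewrite <- lsum_scal, <- lsum_minus. apply lsum_ext. intros [l y] _.
    unfold drift_row, delta. simpl.
    destruct (eqd z (act g y)) as [Ez | Hne]; destruct (eqd (act (inv g) z) y) as [E | Hne'].
    - rewrite Ez, act_invK. field. apply Rgt_not_eq, w_pos.
    - exfalso. apply Hne'. rewrite Ez. apply act_invK.
    - exfalso. apply Hne. rewrite <- E. auto.
    - ring. }
  rewrite Hmass, lsum_prod.
  eapply Rle_trans; [apply (namioka L eps Hiso Y Z q); auto|].
  right. apply lsum_ext. intros g _. apply lsum_ext. intros z _.
  rewrite Hrow, ppart_scale; [ring | left; apply w_pos].
Qed.

(* By the Farkas alternative, the isoperimetric inequality yields, for every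
   finite set Y, a [0,1]-valued family whose drift is at least eps on Y. *)
Lemma local_witness L eps : NoDup L -> isoperimetric L eps ->
  forall Y : list X, NoDup Y ->
  exists phi : G -> X -> R, (forall g x, 0 <= phi g x <= 1) /\
    forall y, In y Y -> eps <= drift L phi y.
Proof.
  intros NL Hiso Y NY.
  set (Z := dedup (Y ++ flat_map (fun g => map (act g) Y) L)).
  assert (NZ : NoDup Z) by apply dedup_NoDup.
  assert (YZ : incl Y Z) by (intros y Hy; apply dedup_In, in_or_app; auto).
  assert (gYZ : forall g y, In g L -> In y Y -> In (act g y) Z).
  { intros g y Hg Hy. apply dedup_In, in_or_app. right. apply in_flat_map.
    exists g. split; auto. apply in_map; auto. }
  destruct (box_farkas (list_prod L Z) drift_row (fun _ => eps) Y (NoDup_prod L Z NL NZ))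
    as [[x [Hx01 Hx]] | [c [Hc Hlt]]].
  - exists (fun g z => x (g, z)). split; [auto|].
    intros y Hy. rewrite <- (drift_as_form L Z); auto.
  - exfalso. pose proof (drift_certificate_bound L eps Y Z c Hiso NZ YZ gYZ Hc). lra.
Qed.

Lemma drift_ulim {T} (U : (T -> Prop) -> Prop) (HU : ultra T U) L
  (Phi : T -> G -> X -> R) y :
  (forall t g x, 0 <= Phi t g x <= 1) ->
  ulim U (fun t => drift L (Phi t) y) = drift L (fun g x => ulim U (fun t => Phi t g x)) y.
Proof.
  intros H01.
  assert (Hb : forall g x, bounded_fun (fun t => Phi t g x)).
  { intros g x. exists 1. intro t. specialize (H01 t g x). rewrite Rabs_pos_eq; lra. }
  unfold drift. rewrite (ulim_lsum _ U HU (fun g t => w (act g y) / w y * Phi t g (act g y) - Phi t g y)).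
  - apply lsum_ext. intros g _.
    rewrite (ulim_ext _ U _ (fun t => w (act g y) / w y * Phi t g (act g y) + (-1) * Phi t g y))
      by (intros; ring).
    rewrite (ulim_plus _ U HU), !(ulim_scal _ U HU); auto; [ring | apply bounded_scal; auto ..].
  - intros g. unfold Rminus. apply bounded_plus; [apply bounded_scal; auto|].
    apply (bounded_ext (fun t => -1 * Phi t g y)); [intros; ring | apply bounded_scal; auto].
Qed.

(* Compactness: the local witnesses converge along an ultrafilter of finite
   sets to a global witness. *)
Lemma global_witness L eps : NoDup L -> isoperimetric L eps ->
  exists phi : G -> X -> R, (forall g x, 0 <= phi g x <= 1) /\ forall y, eps <= drift L phi y.
Proof.
  intros NL Hiso.
  destruct (superset_ultrafilter X) as [U [HU HUl]].
  set (spec := fun (Y : list X) (phi : G -> X -> R) =>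
         (forall g x, 0 <= phi g x <= 1) /\ forall y, In y (dedup Y) -> eps <= drift L phi y).
  set (Phi := fun Y => epsilon (inhabits (fun (_ : G) (_ : X) => 0)) (spec Y)).
  assert (HPhi : forall Y, spec Y (Phi Y)).
  { intro Y. apply epsilon_spec, local_witness; auto. apply dedup_NoDup. }
  assert (H01 : forall Y g x, 0 <= Phi Y g x <= 1) by (intros; apply HPhi).
  assert (Hb : forall g x, bounded_fun (fun Y => Phi Y g x)).
  { intros g x. exists 1. intro Y. specialize (H01 Y g x). rewrite Rabs_pos_eq; lra. }
  assert (Hconst : forall c : R, bounded_fun (fun _ : list X => c)) by (intros c; exists (Rabs c); intros; lra).
  exists (fun g x => ulim U (fun Y => Phi Y g x)). split.
  - intros g x. rewrite <- (ulim_const _ U HU 0), <- (ulim_const _ U HU 1) at 1.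
    split; apply ulim_le; auto; apply u_always; auto; intros; apply H01.
  - intro y. rewrite <- drift_ulim, <- (ulim_const _ U HU eps); auto.
    apply ulim_le; auto.
    + apply (bounded_lsum (fun g Y => w (act g y) / w y * Phi Y g (act g y) - Phi Y g y)).
      intros g _. unfold Rminus. apply bounded_plus; [apply bounded_scal; auto|].
      apply (bounded_ext (fun Y => -1 * Phi Y g y)); [intros; ring | apply bounded_scal; auto].
    + apply (u_mono1 _ U HU _ _ (HUl [y])). intros Y HY. apply HPhi.
      apply dedup_In, HY. left; auto.
Qed.

Hypothesis w_bounded : bounded_cond act w.

Lemma ratio_nonneg g x : 0 <= w (act g x) / w x.
Proof. unfold Rdiv. apply Rmult_le_pos; [left | left; apply Rinv_0_lt_compat]; auto. Qed.

Lemma ratio_bounded g : exists M, 0 <= M /\ forall x, w (act g x) / w x <= M.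
Proof.
  destruct (w_bounded g) as [M HM]. exists (Rabs M). split; [apply Rabs_pos|].
  intros x. pose proof (Rle_abs M). specialize (HM x). lra.
Qed.

Lemma bounded_transport g F : bounded_fun F ->
  bounded_fun (fun x => w (act g x) / w x * F (act g x)).
Proof.
  intros [MF HF]. destruct (ratio_bounded g) as [M [HM0 HM]]. exists (M * MF). intro x.
  rewrite Rabs_mult, Rabs_pos_eq by apply ratio_nonneg.
  apply Rmult_le_compat; auto; [apply ratio_nonneg | apply Rabs_pos].
Qed.

Section InvariantMean.

Variables (mu : (X -> Prop) -> R) (I : (X -> R) -> R).
Hypothesis Hmean : is_mean mu.
Hypothesis HI : is_integral_of mu I.
Hypothesis Hinvar : forall g A, mu (img act g A) = I (fun x => indicator A x * (w (act g x) / w x)).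

Lemma transport_indicator g (B : X -> Prop) :
  I (fun x => w (act g x) / w x * indicator B (act g x)) = I (indicator B).
Proof.
  rewrite (proj2 (proj2 (proj2 HI))).
  replace (fun x => w (act g x) / w x * indicator B (act g x))
    with (fun x => indicator (fun y => B (act g y)) x * (w (act g x) / w x))
    by (apply functional_extensionality; intros; unfold indicator;
        destruct (excluded_middle_informative _); ring).
  rewrite <- Hinvar. apply Hmean. intro z. split.
  - intros [y [Hy ->]]. auto.
  - intros Hz. exists (act (inv g) z). rewrite act_Kinv. auto.
Qed.

Lemma transport_staircase g k F :
  I (fun x => w (act g x) / w x * staircase k F (act g x)) = I (staircase k F).
Proof.
  set (B := fun j y => INR j / INR k <= F y).
  replace (fun x => w (act g x) / w x * staircase k F (act g x))
    with (fun x => lsum (fun j => / INR k * (w (act g x) / w x * indicator (B j) (act g x))) (seq 1 k))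
    by (apply functional_extensionality; intros x; unfold staircase;
        rewrite <- lsum_scal, <- lsum_scal; apply lsum_ext; intros; unfold B; ring).
  transitivity (lsum (fun j => / INR k * I (indicator (B j))) (seq 1 k)).
  - rewrite (integral_lsum mu I Hmean HI
      (fun j x => / INR k * (w (act g x) / w x * indicator (B j) (act g x)))).
    + apply lsum_ext. intros j _.
      rewrite (integral_scal mu I HI), transport_indicator; auto.
      apply bounded_transport, bounded_indicator.
    + intros. apply bounded_scal, bounded_transport, bounded_indicator.
  - replace (staircase k F) with (fun x => lsum (fun j => / INR k * indicator (B j) x) (seq 1 k))
      by (apply functional_extensionality; intros x; unfold staircase; rewrite lsum_scal; auto).
    rewrite (integral_lsum mu I Hmean HI (fun j x => / INR k * indicator (B j) x)).
    + apply lsum_ext. intros j _. rewrite (integral_scal mu I HI); auto. apply bounded_indicator.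
    + intros. apply bounded_scal, bounded_indicator.
Qed.

(* Invariance extends from indicators to all [0,1]-valued functions, by
   approximation with staircase functions. *)
Lemma transport g F : (forall x, 0 <= F x <= 1) ->
  I (fun x => w (act g x) / w x * F (act g x)) = I F.
Proof.
  intros HF. destruct (ratio_bounded g) as [M [HM0 HM]].
  assert (HbF : bounded_fun F) by (exists 1; intros x; specialize (HF x); rewrite Rabs_pos_eq; lra).
  assert (Hmono := integral_mono mu I HI).
  assert (Hconst := integral_const mu I Hmean HI).
  apply Rminus_diag_uniq, (eq0_of_le_div_all _ (M + 1)). intros k Hk.
  assert (Hkr : 0 < INR k) by (apply lt_0_INR; auto).
  set (s := staircase k F).
  assert (Hs : forall x, F x - / INR k <= s x <= F x) by (intros; apply staircase_bounds; auto).
  assert (Hbs : bounded_fun s)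
    by (apply bounded_scal, bounded_lsum; intros; apply bounded_indicator).
  assert (Hbd : bounded_fun (fun x => F x - s x)) by (apply bounded_minus; auto).
  (* The error splits into a transported and a plain part, each below 1/k. *)
  assert (Hsplit : I (fun x => w (act g x) / w x * F (act g x)) - I F =
                   I (fun x => w (act g x) / w x * (F (act g x) - s (act g x))) -
                   I (fun x => F x - s x)).
  { rewrite (integral_minus mu I HI F s) by auto.
    replace (fun x => w (act g x) / w x * (F (act g x) - s (act g x)))
      with (fun x => w (act g x) / w x * F (act g x) - w (act g x) / w x * s (act g x))
      by (apply functional_extensionality; intros; ring).
    rewrite (integral_minus mu I HI) by (apply bounded_transport; auto).
    unfold s. rewrite transport_staircase. ring. }
  assert (H1 : 0 <= I (fun x => w (act g x) / w x * (F (act g x) - s (act g x))) <= M / INR k).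
  { pose proof (bounded_transport g (fun y => F y - s y) Hbd) as Hbt.
    rewrite <- (Hconst 0), <- (Hconst (M / INR k)).
    split; apply Hmono; auto using bounded_const; intros x;
      specialize (Hs (act g x)); pose proof (ratio_nonneg g x); [nra|].
    apply Rle_trans with (M * / INR k); [|right; reflexivity].
    apply Rmult_le_compat; auto; lra. }
  assert (H2 : 0 <= I (fun x => F x - s x) <= 1 / INR k).
  { rewrite <- (Hconst 0), <- (Hconst (1 / INR k)).
    split; apply Hmono; try apply bounded_const; auto; intros x; specialize (Hs x);
      unfold Rdiv; lra. }
  rewrite Hsplit. unfold Rdiv in *. apply Rabs_le. nra.
Qed.

Lemma integral_drift L phi : (forall g x, 0 <= phi g x <= 1) -> I (drift L phi) = 0.
Proof.
  intros H01.
  assert (Hb : forall g, bounded_fun (phi g))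
    by (intros g; exists 1; intros x; specialize (H01 g x); rewrite Rabs_pos_eq; lra).
  unfold drift. rewrite (integral_lsum mu I Hmean HI
    (fun g y => w (act g y) / w y * phi g (act g y) - phi g y)).
  - apply lsum_zero. intros g _. rewrite (integral_minus mu I HI), transport; auto.
    + ring.
    + apply bounded_transport; auto.
  - intros g _. apply bounded_minus; [apply bounded_transport|]; auto.
Qed.

Lemma mean_excludes_drift L eps phi : 0 < eps -> (forall g x, 0 <= phi g x <= 1) ->
  ~ (forall y, eps <= drift L phi y).
Proof.
  intros Heps H01 Hdrift.
  assert (Hb : bounded_fun (drift L phi)).
  { apply bounded_lsum. intros g _. apply bounded_minus; [apply bounded_transport|];
      exists 1; intros x; specialize (H01 g x); rewrite Rabs_pos_eq; lra. }
  pose proof (integral_mono mu I HI _ _ (bounded_const eps) Hb Hdrift).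
  rewrite (integral_const mu I Hmean HI), integral_drift in H; auto. lra.
Qed.

End InvariantMean.

(* Direction (i) => (ii), for one finite set of group elements: an invariant
   mean forces Følner sets, for otherwise the isoperimetric inequality holds,
   yielding a family with drift >= eps everywhere, which no mean allows. *)
Lemma folner_set_of_invariant_mean mu : w_invariant_mean act w mu ->
  forall L eps, NoDup L -> 0 < eps -> exists S, folner_set L eps S.
Proof.
  intros [Hmean [I [HI Hinvar]]] L eps NL Heps. apply NNPP. intros Hno.
  destruct (global_witness L eps NL (isoperimetric_of_no_folner_set L eps Hno)) as [phi [H01 Hphi]].
  exact (mean_excludes_drift mu I Hmean HI Hinvar L eps phi Heps H01 Hphi).
Qed.

Definition average (S : list X) (H : X -> R) : R :=
  mass (dedup S) H / mass (dedup S) (fun _ => 1).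

Lemma mass_one_pos (S : list X) : S <> [] -> 0 < mass (dedup S) (fun _ => 1).
Proof.
  intros HS. destruct S as [|s0 S0]; [congruence|].
  apply Rlt_le_trans with (w s0 * 1); [rewrite Rmult_1_r; auto|].
  apply (lsum_term_le (fun z => w z * 1)); [intros; rewrite Rmult_1_r; left; auto|].
  apply dedup_In. left. auto.
Qed.

Section Averages.

Variable S : list X.
Hypothesis HS : S <> [].

Lemma average_plus H K : average S (fun x => H x + K x) = average S H + average S K.
Proof.
  pose proof (mass_one_pos S HS). unfold average, mass in *.
  rewrite (lsum_ext _ (fun x => w x * H x + w x * K x)) by (intros; ring).
  rewrite lsum_plus. field. lra.
Qed.

Lemma average_scal c H : average S (fun x => c * H x) = c * average S H.
Proof.
  pose proof (mass_one_pos S HS). unfold average, mass in *.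
  rewrite (lsum_ext _ (fun x => c * (w x * H x))) by (intros; ring).
  rewrite lsum_scal. field. lra.
Qed.

Lemma average_one : average S (fun _ => 1) = 1.
Proof. pose proof (mass_one_pos S HS). unfold average. field. lra. Qed.

Lemma average_mono H K : (forall x, H x <= K x) -> average S H <= average S K.
Proof.
  intros HK. pose proof (mass_one_pos S HS). unfold average, Rdiv.
  apply Rmult_le_compat_r; [left; apply Rinv_0_lt_compat; auto|].
  apply lsum_le. intros x _. apply Rmult_le_compat_l; [left|]; auto.
Qed.

Lemma average_const c : average S (fun _ => c) = c.
Proof.
  replace (fun _ : X => c) with (fun _ : X => c * 1) by (apply functional_extensionality; intros; ring).
  rewrite average_scal, average_one. ring.
Qed.

Lemma average_abs_le H M : (forall x, Rabs (H x) <= M) -> Rabs (average S H) <= M.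
Proof.
  intros HM. apply Rabs_le.
  split; [rewrite <- (average_const (- M)) | rewrite <- (average_const M)];
    apply average_mono; intros x; specialize (HM x);
    pose proof (Rle_abs (H x)); pose proof (Rle_abs (- H x)); rewrite Rabs_Ropp in *; lra.
Qed.

End Averages.

Lemma mean_of_averages {T} (U : (T -> Prop) -> Prop) (HU : ultra T U) (Ss : T -> list X) :
  (forall t, Ss t <> []) ->
  let I := fun H => ulim U (fun t => average (Ss t) H) in
  is_mean (fun B => I (indicator B)) /\ is_integral_of (fun B => I (indicator B)) I.
Proof.
  intros Hne I.
  assert (Hb : forall H, bounded_fun H -> bounded_fun (fun t => average (Ss t) H)).
  { intros H [M HM]. exists M. intros t. apply average_abs_le; auto. }
  assert (Hpos : forall H, bounded_fun H -> (forall x, 0 <= H x) -> 0 <= I H).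
  { intros H HH Hp. unfold I. rewrite <- (ulim_const _ U HU 0).
    apply ulim_le; auto using bounded_const. apply u_always; auto. intros t.
    rewrite <- (average_const (Ss t) (Hne t) 0). apply average_mono; auto. }
  assert (HI : is_integral_of (fun B => I (indicator B)) I).
  { split; [|split; [|split]]; auto.
    - intros H K HH HK. unfold I. rewrite (ulim_ext _ U _ (fun t => average (Ss t) H + average (Ss t) K))
        by (intros; apply average_plus; auto).
      apply ulim_plus; auto.
    - intros c H HH. unfold I. rewrite (ulim_ext _ U _ (fun t => c * average (Ss t) H))
        by (intros; apply average_scal; auto).
      apply ulim_scal; auto. }
  split; [split; [|split; [|split]] | exact HI].
  - intros A B HAB. f_equal. apply functional_extensionality. intro x. unfold indicator.
    destruct (excluded_middle_informative (A x)), (excluded_middle_informative (B x));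
      auto; exfalso; firstorder.
  - intros A. apply Hpos; [apply bounded_indicator | intros; apply indicator_01].
  - unfold I. rewrite <- (ulim_const _ U HU 1). apply ulim_ext. intros t.
    rewrite <- (average_const (Ss t) (Hne t) 1). f_equal. apply functional_extensionality. intros x.
    unfold indicator. destruct (excluded_middle_informative True); tauto.
  - intros A B Hdisj.
    replace (indicator (fun x => A x \/ B x)) with (fun x => indicator A x + indicator B x).
    + apply HI; apply bounded_indicator.
    + apply functional_extensionality. intro x. unfold indicator.
      destruct (excluded_middle_informative (A x)), (excluded_middle_informative (B x)),
        (excluded_middle_informative (A x \/ B x)); try ring; exfalso; firstorder.
Qed.

Lemma act_inv_inv g y : act (inv (inv g)) y = act g y.
Proof. rewrite <- (act_invK g y) at 1. apply act_invK. Qed.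

Lemma ppart_ind_support (S : list X) a b : ppart (ind S a - ind S b) <> 0 -> In a S.
Proof.
  unfold ppart, ind, indicator. intros H.
  destruct (excluded_middle_informative (In a S)); auto.
  exfalso. apply H. destruct (excluded_middle_informative _); apply Rmax_right; lra.
Qed.

Lemma mass_dedup_frame (S Z : list X) H : NoDup Z -> incl S Z ->
  mass (dedup S) H = mass Z (fun x => ind S x * H x).
Proof.
  intros NZ HSZ. unfold mass.
  assert (Hsupp : forall x, w x * (ind S x * H x) <> 0 -> In x S).
  { intros x Hx. unfold ind, indicator in Hx.
    destruct (excluded_middle_informative (In x S)); auto. exfalso. apply Hx. ring. }
  transitivity (lsum (fun x => w x * (ind S x * H x)) (dedup S)).
  - apply lsum_ext. intros x Hx. unfold ind, indicator.
    destruct (excluded_middle_informative (In x S)) as [_ | n]; [ring|].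
    exfalso. apply n, (dedup_In S x), Hx.
  - apply lsum_supp; [apply dedup_NoDup | auto | intros x Hx; apply dedup_In; auto
                     | intros x Hx; apply HSZ; auto].
Qed.

Lemma average_translate_mass g (A : X -> Prop) (S Z : list X) :
  S <> [] -> NoDup Z -> incl S Z ->
  average S (indicator (img act g A)) * mass Z (ind S) =
  mass Z (fun z => ind S z * indicator A (act (inv g) z)).
Proof.
  intros HS NZ HSZ.
  assert (Hw : mass (dedup S) (fun _ => 1) = mass Z (ind S)).
  { rewrite (mass_dedup_frame S Z) by auto. apply lsum_ext. intros; ring. }
  pose proof (mass_one_pos S HS) as Hpos.
  unfold average. rewrite <- Hw, (mass_dedup_frame S Z) by auto. field_simplify; [|lra].
  apply lsum_ext. intros z _. unfold indicator.
  destruct (excluded_middle_informative (img act g A z)) as [[y [Hy Ez]] | h1];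
    destruct (excluded_middle_informative (A (act (inv g) z))) as [h2 | h2]; try ring; exfalso.
  - rewrite Ez, act_invK in h2. auto.
  - apply h1. exists (act (inv g) z). rewrite act_Kinv. auto.
Qed.

(* w(S) times the average of 1_A * w(g.)/w over S, after the change of
   variables z = gx. *)
Lemma average_ratio_mass g (A : X -> Prop) (S Z : list X) :
  S <> [] -> NoDup Z -> incl S Z -> (forall x, In x S -> In (act g x) Z) ->
  average S (fun x => indicator A x * (w (act g x) / w x)) * mass Z (ind S) =
  mass Z (fun z => ind S (act (inv g) z) * indicator A (act (inv g) z)).
Proof.
  intros HS NZ HSZ HgS.
  assert (Hw : mass (dedup S) (fun _ => 1) = mass Z (ind S)).
  { rewrite (mass_dedup_frame S Z) by auto. apply lsum_ext. intros; ring. }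
  pose proof (mass_one_pos S HS) as Hpos.
  unfold average. rewrite <- Hw, (mass_dedup_frame S Z) by auto. field_simplify; [|lra].
  assert (Hsupp : forall z, w z * (ind S (act (inv g) z) * indicator A (act (inv g) z)) <> 0 ->
                            In (act (inv g) z) S).
  { intros z Hz. unfold ind, indicator in Hz.
    destruct (excluded_middle_informative (In (act (inv g) z) S)); auto. exfalso. apply Hz. ring. }
  unfold mass. symmetry.
  rewrite (lsum_reindex (act g) (act (inv g)) (act_invK g) (act_Kinv g) _ Z Z NZ NZ).
  - apply lsum_ext. intros x _. rewrite act_invK. field. apply Rgt_not_eq, w_pos.
  - intros z Hz. rewrite <- (act_Kinv g z). apply HgS, Hsupp, Hz.
  - intros z Hz. apply HSZ, Hsupp, Hz.
Qed.

(* Points of S leaving S under g^-1, weighted by w, are controlled by the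
   leak of g^-1 (the bound on w(g.)/w enters here). *)
Lemma back_leak_bound g (S Z : list X) M : NoDup Z -> incl S Z ->
  (forall x, In x S -> In (act (inv g) x) Z) -> (forall x, w (act g x) <= M * w x) ->
  lsum (fun z => w z * ppart (ind S z - ind S (act (inv g) z))) Z <= M * leak (inv g) Z (ind S).
Proof.
  intros NZ HSZ HiS HM.
  rewrite (lsum_reindex (act g) (act (inv g)) (act_invK g) (act_Kinv g) _ Z Z NZ NZ).
  - unfold leak. rewrite <- lsum_scal. apply lsum_le. intros y _.
    rewrite act_invK, act_inv_inv, <- Rmult_assoc.
    apply Rmult_le_compat_r; [apply ppart_nonneg | auto].
  - intros z Hz. apply HSZ. apply (ppart_ind_support S z (act (inv g) z)).
    intros E. apply Hz. rewrite E. ring.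
  - intros z Hz. apply HiS. apply (ppart_ind_support S z (act (inv g) z)).
    intros E. apply Hz. rewrite E. ring.
Qed.

Lemma average_transport_error g (A : X -> Prop) (S Z : list X) M :
  S <> [] -> NoDup Z -> incl S Z -> (forall x, In x S -> In (act g x) Z) ->
  (forall x, In x S -> In (act (inv g) x) Z) -> (forall x, w (act g x) <= M * w x) ->
  Rabs (average S (indicator (img act g A)) -
        average S (fun x => indicator A x * (w (act g x) / w x))) * mass Z (ind S) <=
  leak g Z (ind S) + M * leak (inv g) Z (ind S).
Proof.
  intros HS NZ HSZ HgS HiS HM.
  pose proof (mass_ind_pos S Z HS HSZ) as HW.
  rewrite <- (Rabs_pos_eq (mass Z (ind S))) by lra.
  rewrite <- Rabs_mult, Rmult_minus_distr_r, average_translate_mass, average_ratio_mass by auto.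
  unfold mass. rewrite <- lsum_minus. eapply Rle_trans; [apply lsum_abs|].
  eapply Rle_trans; [|apply Rplus_le_compat_l, (back_leak_bound g S Z M); auto].
  unfold leak. rewrite <- lsum_plus. apply lsum_le. intros z _.
  pose proof (w_pos z). pose proof (indicator_01 A (act (inv g) z)).
  pose proof (indicator_01 (fun x => In x S) z).
  pose proof (indicator_01 (fun x => In x S) (act (inv g) z)).
  unfold ind in *. set (a := indicator (fun x => In x S) z) in *.
  set (b := indicator (fun x => In x S) (act (inv g) z)) in *.
  set (c := indicator A (act (inv g) z)) in *.
  replace (w z * (a * c) - w z * (b * c)) with (w z * c * (a - b)) by ring.
  rewrite Rabs_mult, (Rabs_pos_eq (w z * c)) by nra.
  rewrite <- Rmult_plus_distr_l.
  assert (Rabs (a - b) <= ppart (b - a) + ppart (a - b)).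
  { unfold ppart. destruct_Rmax; apply Rabs_le; lra. }
  replace (w z * c * Rabs (a - b)) with (c * (w z * Rabs (a - b))) by ring.
  apply Rle_trans with (1 * (w z * Rabs (a - b))).
  - apply Rmult_le_compat_r; [apply Rmult_le_pos; [lra | apply Rabs_pos] | lra].
  - rewrite Rmult_1_l. apply Rmult_le_compat_l; lra.
Qed.

Lemma folner_leak_small F : w_folner act w F -> forall g eps, 0 < eps ->
  exists N, forall n, (N <= n)%nat -> forall Z, NoDup Z -> incl (F n) Z ->
    (forall x, In x (F n) -> In (act g x) Z) ->
    leak g Z (ind (F n)) < eps * mass Z (ind (F n)).
Proof.
  intros [Hne HF] g eps Heps. destruct (HF eps Heps [g]) as [N HN].
  exists N. intros n Hn Z NZ HFZ HgZ.
  assert (Hcov : forall x, img act g (fun y => In y (F n)) x \/ In x (F n) -> In x Z)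
    by (intros x [[y [Hy ->]] | Hx]; auto).
  apply (proj1 (folner_ratio g (F n) Z _ _ eps (Hne n) NZ HFZ HgZ
                  (mass_set_weight _ Z NZ Hcov) (mass_set_weight _ Z NZ HFZ))).
  exact (HN n Hn g (or_introl eq_refl) _ _ (mass_set_weight _ Z NZ Hcov)
            (mass_set_weight _ Z NZ HFZ)).
Qed.

Lemma folner_average_defect F : w_folner act w F -> forall g (A : X -> Prop) d, 0 < d ->
  exists N, forall n, (N <= n)%nat ->
    Rabs (average (F n) (indicator (img act g A)) -
          average (F n) (fun x => indicator A x * (w (act g x) / w x))) < d.
Proof.
  intros HF g A d Hd. pose proof HF as [Hne _].
  destruct (ratio_bounded g) as [M [HM0 HM]].
  assert (HMw : forall x, w (act g x) <= M * w x).
  { intros x. specialize (HM x). pose proof (w_pos x).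
    apply (Rmult_le_compat_r (w x)) in HM; [|lra]. unfold Rdiv in HM.
    rewrite Rmult_assoc, Rinv_l, Rmult_1_r in HM; lra. }
  set (eps := d / (2 * (1 + M))).
  assert (He : 0 < eps) by (unfold eps; apply Rdiv_lt_0_compat; lra).
  destruct (folner_leak_small F HF g eps He) as [N1 HN1].
  destruct (folner_leak_small F HF (inv g) eps He) as [N2 HN2].
  exists (Nat.max N1 N2). intros n Hn.
  set (Z := dedup (F n ++ map (act g) (F n) ++ map (act (inv g)) (F n))).
  assert (NZ : NoDup Z) by apply dedup_NoDup.
  assert (FZ : incl (F n) Z) by (intros x Hx; apply dedup_In, in_or_app; auto).
  assert (gFZ : forall x, In x (F n) -> In (act g x) Z)
    by (intros x Hx; apply dedup_In, in_or_app; right; apply in_or_app; left; apply in_map; auto).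
  assert (iFZ : forall x, In x (F n) -> In (act (inv g) x) Z)
    by (intros x Hx; apply dedup_In, in_or_app; right; apply in_or_app; right; apply in_map; auto).
  pose proof (average_transport_error g A (F n) Z M (Hne n) NZ FZ gFZ iFZ HMw) as Herr.
  pose proof (HN1 n ltac:(lia) Z NZ FZ gFZ) as L1.
  pose proof (HN2 n ltac:(lia) Z NZ FZ iFZ) as L2.
  pose proof (mass_ind_pos (F n) Z (Hne n) FZ) as HW.
  set (W := mass Z (ind (F n))) in *.
  assert (Hsum : eps * W + M * (eps * W) = d / 2 * W) by (unfold eps; field; lra).
  apply (Rmult_lt_reg_r W); auto.
  apply Rlt_le, (Rmult_le_compat_l M) in L2; [|lra]. nra.
Qed.

Lemma mean_of_folner_sequence F : w_folner act w F -> exists mu, w_invariant_mean act w mu.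
Proof.
  intros HF. destruct (tail_ultrafilter) as [U [HU HUN]].
  pose proof HF as [Hne _].
  destruct (mean_of_averages U HU F Hne) as [Hmean HI].
  set (I := fun H => ulim U (fun n => average (F n) H)) in *.
  exists (fun B => I (indicator B)). split; auto. exists I. split; auto.
  intros g A. unfold I.
  assert (Hbavg : forall H, bounded_fun H -> bounded_fun (fun n => average (F n) H)).
  { intros H [K HK]. exists K. intros n. apply average_abs_le; auto. }
  apply ulim_eq_of_diff; auto.
  - apply Hbavg, bounded_indicator.
  - apply Hbavg. destruct (ratio_bounded g) as [M [HM0 HM]]. exists M. intros x.
    rewrite Rabs_mult, Rabs_pos_eq, Rabs_pos_eq by apply ratio_nonneg || apply indicator_01.
    pose proof (indicator_01 A x). pose proof (ratio_nonneg g x). specialize (HM x). nra.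
  - intros d Hd. destruct (folner_average_defect F HF g A d Hd) as [N HN].
    apply (u_mono1 _ U HU _ _ (HUN N)). intros n Hn. rewrite Rminus_0_r. auto.
Qed.

End WeightedAction.

Lemma enum_below {G} (f : G -> nat) (Hf : forall a b, f a = f b -> a = b) n :
  exists L : list G, NoDup L /\ forall g, In g L <-> (f g < n)%nat.
Proof.
  induction n as [|n [L [NL HL]]].
  - exists []. split; [constructor | intros g; simpl; split; [tauto | lia]].
  - destruct (classic (exists g, f g = n)) as [[g0 Hg0] | Hno].
    + exists (L ++ [g0]). split.
      * apply NoDup_app; auto; [repeat constructor; auto|].
        intros a Ha [<- | []]. apply HL in Ha. lia.
      * intro g. rewrite in_app_iff, HL. simpl. split; [intros [H | [<- | []]]; lia|].
        intros H. destruct (Nat.eq_dec (f g) n); [right; left; apply Hf; congruence | left; lia].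
    + exists L. split; auto. intro g. rewrite HL. split; [lia|]. intros H.
      destruct (Nat.eq_dec (f g) n); [exfalso; apply Hno; eauto | lia].
Qed.

Lemma code_bound {G} (f : G -> nat) (L : list G) : exists N, forall g, In g L -> (f g < N)%nat.
Proof.
  induction L as [|a L [N HN]]; [exists 0%nat; intros g [] |].
  exists (Nat.max N (S (f a))). intros g [<- | Hg]; [lia | specialize (HN g Hg); lia].
Qed.

(* Diagonal choice: the n-th set handles the elements of code below n with
   precision 1/(n+1). *)
Lemma folner_sequence_of_sets {G X} (act : G -> X -> X) (w : X -> R) :
  countable G ->
  (forall L eps, NoDup L -> 0 < eps -> exists S, folner_set act w L eps S) ->
  exists F : nat -> list X, w_folner act w F.
Proof.
  intros [f Hf] Hsets.
  set (Lf := fun n => epsilon (inhabits []) (fun L : list G => NoDup L /\ forall g, In g L <-> (f g < n)%nat)).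
  assert (HLf : forall n, NoDup (Lf n) /\ forall g, In g (Lf n) <-> (f g < n)%nat)
    by (intro n; apply epsilon_spec, enum_below; auto).
  set (F := fun n => epsilon (inhabits []) (folner_set act w (Lf n) (/ (INR n + 1)))).
  assert (HF : forall n, folner_set act w (Lf n) (/ (INR n + 1)) (F n)).
  { intro n. apply epsilon_spec, Hsets; [apply HLf|].
    apply Rinv_0_lt_compat. pose proof (pos_INR n). lra. }
  exists F. split; [intro n; apply (HF n)|].
  intros eps Heps L.
  destruct (INR_unbounded (/ eps)) as [N1 HN1].
  destruct (code_bound f L) as [N0 HN0].
  exists (Nat.max N0 N1). intros n Hn g Hg a b Ha Hb.
  assert (Hgn : In g (Lf n)) by (apply HLf; specialize (HN0 g Hg); lia).
  pose proof (proj2 (HF n) g Hgn a b Ha Hb) as Hlt.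
  assert (HN1n : INR N1 <= INR n) by (apply le_INR; lia).
  assert (/ (INR n + 1) < eps).
  { pose proof (pos_INR N1). rewrite <- (Rinv_inv eps).
    apply Rinv_lt_contravar; [apply Rmult_lt_0_compat; [apply Rinv_0_lt_compat|]|]; lra. }
  lra.
Qed.

Theorem theorem1p1 (G X : Type) (mul : G -> G -> G) (inv : G -> G) (e : G)
  (act : G -> X -> X) (w : X -> R)
  (HG : is_group mul inv e) (Hact : is_action mul e act)
  (HGc : countable G) (HXc : countable X)
  (Hwpos : forall x, 0 < w x) (Hwb : bounded_cond act w) :
  (exists mu, w_invariant_mean act w mu) <->
  (exists F : nat -> list X, w_folner act w F).
Proof.
  destruct HG as [_ [_ [_ [Hinvl Hinvr]]]]. destruct Hact as [He Hmul].
  assert (act_invK : forall g x, act (inv g) (act g x) = x) by (intros; rewrite <- Hmul, Hinvl; auto).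
  assert (act_Kinv : forall g x, act g (act (inv g) x) = x) by (intros; rewrite <- Hmul, Hinvr; auto).
  split.
  - intros [mu Hmu]. apply folner_sequence_of_sets; auto.
    exact (folner_set_of_invariant_mean act inv w Hwpos act_invK act_Kinv Hwb mu Hmu).
  - intros [F HF]. exact (mean_of_folner_sequence act inv w Hwpos act_invK act_Kinv Hwb F HF).
Qed.
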